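(* Let $H$ be a real Hilbert space. The set $\mathcal A=\{(B,V)\in\mathcal B_s(H)\times\mathcal G(H): B|_{V\times V}\text{ is essentially positive}\}$ is open in $\mathcal B_s(H)\times\mathcal G(H)$; the map $\mathcal A\ni(B,V)\mapsto\mathrm n_-(B|_{V\times V})+\dim\mathrm{Ker}(B|_{V\times V})\in\mathbb N$ is upper semicontinuous; and the map $\mathcal A\ni(B,V)\mapsto\mathrm n_-(B|_{V\times V})\in\mathbb N$ is lower semicontinuous.
   Context: $\mathcal B_s(H)$ is the space of bounded symmetric bilinear forms on $H$, topologized via the operator norm of the representing self-adjoint operators ($B=\langle T\cdot,\cdot\rangle$). $\mathcal G(H)$ is the set of closed subspaces of $H$ with the metric $\mathrm{dist}(X,Y)=\|P_X-P_Y\|$, $P_Z$ the orthogonal projection onto $Z$. A bounded symmetric form on a closed subspace $V$ (a Hilbert space) is essentially positive if its representing operator is $P+K$ with $P$ a self-adjoint isomorphism with $\langle Px,x\rangle>0$ for $x\neq0$ and $K$ compact. $\mathrm n_-$ is the maximal dimension of a negative definite subspace; $\mathrm{Ker}(B|_{V\times V})=\{x\in V: B(x,y)=0\ \forall y\in V\}$. *)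

From Stdlib Require Import Reals.
Open Scope R_scope.

Record RHilbert := {
  hcar :> Type;
  hzero : hcar;
  hadd : hcar -> hcar -> hcar;
  hopp : hcar -> hcar;
  hscal : R -> hcar -> hcar;
  hinner : hcar -> hcar -> R;
  hadd_assoc : forall x y z, hadd x (hadd y z) = hadd (hadd x y) z;
  hadd_comm : forall x y, hadd x y = hadd y x;
  hadd_zero : forall x, hadd hzero x = x;
  hadd_opp : forall x, hadd (hopp x) x = hzero;
  hscal_one : forall x, hscal 1 x = x;
  hscal_assoc : forall a b x, hscal a (hscal b x) = hscal (a * b) x;
  hscal_distr_v : forall a x y, hscal a (hadd x y) = hadd (hscal a x) (hscal a y);
  hscal_distr_s : forall a b x, hscal (a + b) x = hadd (hscal a x) (hscal b x);
  hinner_sym : forall x y, hinner x y = hinner y x;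
  hinner_add : forall x y z, hinner (hadd x y) z = hinner x z + hinner y z;
  hinner_scal : forall a x y, hinner (hscal a x) y = a * hinner x y;
  hinner_pos : forall x, 0 <= hinner x x;
  hinner_def : forall x, hinner x x = 0 -> x = hzero;
  hcomplete : forall u : nat -> hcar,
    (forall eps, 0 < eps -> exists N, forall m n, (N <= m)%nat -> (N <= n)%nat ->
        sqrt (hinner (hadd (u m) (hopp (u n))) (hadd (u m) (hopp (u n)))) < eps) ->
    exists l, forall eps, 0 < eps -> exists N, forall n, (N <= n)%nat ->
        sqrt (hinner (hadd (u n) (hopp l)) (hadd (u n) (hopp l))) < eps
}.

Section Hilb.
Context {E : RHilbert}.

Definition hsub (x y : E) : E := hadd E x (hopp E y).
Definition hnorm (x : E) : R := sqrt (hinner E x x).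

Definition converges (u : nat -> E) (l : E) : Prop :=
  forall eps, 0 < eps -> exists N, forall n, (N <= n)%nat -> hnorm (hsub (u n) l) < eps.

Definition is_linear (f : E -> E) : Prop :=
  (forall x y, f (hadd E x y) = hadd E (f x) (f y)) /\
  (forall a x, f (hscal E a x) = hscal E a (f x)).
Definition bounded_op (f : E -> E) : Prop :=
  is_linear f /\ exists C, forall x, hnorm (f x) <= C * hnorm x.

(** B_s(H): bounded symmetric forms B = <T.,.>, represented by their
    self-adjoint bounded operator T. *)
Definition is_Bs (T : E -> E) : Prop :=
  bounded_op T /\ forall x y, hinner E (T x) y = hinner E x (T y).

Definition opnorm_lt (A : E -> E) (eps : R) : Prop :=
  exists c, c < eps /\ forall x, hnorm (A x) <= c * hnorm x.

Definition closed_subspace (V : E -> Prop) : Prop :=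
  V (hzero E) /\ (forall x y, V x -> V y -> V (hadd E x y)) /\
  (forall a x, V x -> V (hscal E a x)) /\
  (forall u l, (forall n, V (u n)) -> converges u l -> V l).

Definition is_orth_proj (V : E -> Prop) (p : E -> E) : Prop :=
  forall x, V (p x) /\ forall y, V y -> hinner E (hsub x (p x)) y = 0.

Definition gdist_lt (V V' : E -> Prop) (eps : R) : Prop :=
  exists p p', is_orth_proj V p /\ is_orth_proj V' p' /\
    opnorm_lt (fun x => hsub (p x) (p' x)) eps.

Definition compact_on (V : E -> Prop) (K : E -> E) : Prop :=
  forall u : nat -> E, (forall n, V (u n)) -> (exists M, forall n, hnorm (u n) <= M) ->
    exists phi : nat -> nat, (forall n, (phi n < phi (S n))%nat) /\
      exists l, converges (fun n => K (u (phi n))) l.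

(** B|_{VxV} (B = <T.,.>) is essentially positive: its representing operator
    on V is P + K, P a positive self-adjoint isomorphism of V, K compact. *)
Definition ess_positive (T : E -> E) (V : E -> Prop) : Prop :=
  exists P K : E -> E,
    bounded_op P /\ bounded_op K /\
    (forall x, V x -> V (P x)) /\ (forall x, V x -> V (K x)) /\
    (forall x y, V x -> V y -> hinner E (P x) y = hinner E x (P y)) /\
    (exists Q, bounded_op Q /\ (forall x, V x -> V (Q x)) /\
       (forall x, V x -> P (Q x) = x /\ Q (P x) = x)) /\
    (forall x, V x -> x <> hzero E -> 0 < hinner E (P x) x) /\
    compact_on V K /\
    (forall x y, V x -> V y -> hinner E (T x) y = hinner E (hadd E (P x) (K x)) y).

Definition in_A (T : E -> E) (V : E -> Prop) : Prop :=
  is_Bs T /\ closed_subspace V /\ ess_positive T V.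

Fixpoint lincomb (v : nat -> E) (c : nat -> R) (k : nat) : E :=
  match k with
  | O => hzero E
  | S k' => hadd E (lincomb v c k') (hscal E (c k') (v k'))
  end.

(** n_-(B|_{VxV}) >= k: there is a k-dimensional negative definite subspace
    of V (spanned by v_0..v_{k-1}; negative definiteness forces independence) *)
Definition neg_dim_ge (T : E -> E) (V : E -> Prop) (k : nat) : Prop :=
  exists v : nat -> E, (forall i, (i < k)%nat -> V (v i)) /\
    forall c : nat -> R, (exists i, (i < k)%nat /\ c i <> 0) ->
      hinner E (T (lincomb v c k)) (lincomb v c k) < 0.
Definition n_minus_eq (T : E -> E) (V : E -> Prop) (n : nat) : Prop :=
  neg_dim_ge T V n /\ ~ neg_dim_ge T V (S n).

Definition in_ker (T : E -> E) (V : E -> Prop) (x : E) : Prop :=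
  V x /\ forall y, V y -> hinner E (T x) y = 0.
Definition ker_dim_ge (T : E -> E) (V : E -> Prop) (k : nat) : Prop :=
  exists v : nat -> E, (forall i, (i < k)%nat -> in_ker T V (v i)) /\
    forall c : nat -> R, lincomb v c k = hzero E -> forall i, (i < k)%nat -> c i = 0.
Definition ker_dim_eq (T : E -> E) (V : E -> Prop) (d : nat) : Prop :=
  ker_dim_ge T V d /\ ~ ker_dim_ge T V (S d).

End Hilb.

From Stdlib Require Import Reals Lra Lia Psatz List Classical ClassicalEpsilon.
Open Scope R_scope.

(** Everything rests on a Garding inequality ([garding]): for [(T, V)] in [A]
    the form [<T x, x>] is coercive on a subspace of [V] of finite
    codimension, because compact operators are small off finitely many linear
    constraints. Since a [k]-dimensional subspace always meets the solutions
    of fewer than [k] constraints, this bounds [n_-] and [dim Ker].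
    The three continuity statements then follow from a single perturbation
    estimate ([quad_perturb]): if [||T' - T|| <= eps] and
    [||y - x|| <= eps ||x||], the forms [<T' y, y>] and [<T x, x>] differ by
    [O(eps) ||x||^2]; it is applied to vectors moved between [V] and [V'] by
    the orthogonal projections.
    - [n_-] is lower semicontinuous: a negative definite subspace is
      uniformly negative, so its projection to [V'] stays negative.
    - [n_- + dim Ker] is upper semicontinuous: the form is coercive on the
      complement of the negative directions and of the kernel (a compactness
      argument, [complement_coercive]); a larger subspace of [V'] on which
      [T'] is nonpositive would contain a vector projecting into it.
    - [A] is open: [T'|_V' = P_V' (T' - K P_V) + P_V' K P_V], where the first
      part is coercive by the perturbation estimate, hence invertible by
      Lax-Milgram (via the Banach fixed point theorem), and the second part
      is compact. *)

Lemma quadratic_discriminant (a b c : R) :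
  0 <= c -> (forall t, 0 <= a - 2 * t * b + t * t * c) -> b * b <= a * c.
Proof.
  intros Hc H.
  destruct (Rle_lt_or_eq_dec 0 c Hc) as [Hc' | <-].
  - specialize (H (b / c)).
    replace (a - 2 * (b / c) * b + b / c * (b / c) * c) with ((a * c - b * b) / c)
      in H by (field; lra).
    assert (0 <= a * c - b * b); [|lra].
    apply Rmult_le_reg_r with (/ c); [apply Rinv_0_lt_compat; lra|].
    rewrite Rmult_0_l; exact H.
  - destruct (Req_dec b 0) as [-> | Hb]; [lra|].
    specialize (H ((a + 1) / (2 * b))).
    replace (a - 2 * ((a + 1) / (2 * b)) * b + (a + 1) / (2 * b) * ((a + 1) / (2 * b)) * 0)
      with (-1) in H by (field; lra).
    lra.
Qed.

Lemma sqr_le_le (a b : R) : 0 <= b -> a * a <= b * b -> a <= b.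
Proof. intros; nra. Qed.

Lemma inv_succ_below (r : R) : 0 < r -> exists N, / INR (S N) < r.
Proof.
  intro Hr. destruct (INR_archimed r 1 Hr) as [N HN]. exists N.
  rewrite S_INR. assert (H0 := pos_INR N).
  apply Rmult_lt_reg_l with (INR N + 1); [lra|]. rewrite Rinv_r by lra. nra.
Qed.

Lemma inv_succ_antitone (N m : nat) : (N <= m)%nat -> / INR (S m) <= / INR (S N).
Proof. intro H. apply Rinv_le_contravar; [apply lt_0_INR; lia | apply le_INR; lia]. Qed.

Lemma inv_succ_pos (m : nat) : 0 < / INR (S m).
Proof. apply Rinv_0_lt_compat, lt_0_INR; lia. Qed.

(** For every [beta > 0] and [M >= 0] there is a radius [eps <= 1/2] with
    [(3M+4) eps <= beta]; all the neighbourhoods below have this shape. *)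
Lemma small_radius (beta M : R) :
  0 < beta -> 0 <= M -> exists eps, 0 < eps /\ eps <= 1 / 2 /\ (3 * M + 4) * eps <= beta.
Proof.
  intros Hb HM. exists (Rmin (1 / 2) (beta / (3 * M + 4))).
  assert (H1 := Rmin_l (1 / 2) (beta / (3 * M + 4))).
  assert (H2 := Rmin_r (1 / 2) (beta / (3 * M + 4))).
  split; [apply Rmin_glb_lt; [lra | apply Rdiv_lt_0_compat; lra] | split; [exact H1|]].
  apply Rmult_le_reg_l with (/ (3 * M + 4)); [apply Rinv_0_lt_compat; lra|].
  rewrite <- Rmult_assoc, Rinv_l, Rmult_1_l by lra.
  eapply Rle_trans; [exact H2 | right; field; lra].
Qed.

Lemma last_true_before (P : nat -> Prop) (N : nat) : P 0%nat -> ~ P N -> exists n, P n /\ ~ P (S n).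
Proof.
  intros H0. induction N as [|N IH]; intros HN; [contradiction|].
  destruct (classic (P N)) as [HPN|HPN]; [exists N; auto | auto].
Qed.

Fixpoint rsum (f : nat -> R) (k : nat) : R :=
  match k with O => 0 | S k' => rsum f k' + f k' end.

Lemma rsum_zero (f : nat -> R) (k : nat) : (forall i, (i < k)%nat -> f i = 0) -> rsum f k = 0.
Proof. induction k; simpl; intros H; auto. rewrite IHk, H; auto. ring. Qed.

Lemma rsum_ext (f g : nat -> R) (k : nat) :
  (forall i, (i < k)%nat -> f i = g i) -> rsum f k = rsum g k.
Proof. induction k; simpl; intros H; auto. rewrite IHk, H; auto. Qed.

Section Hilbert.
Context {E : RHilbert}.
Notation ip := (hinner E).
Notation add := (hadd E).
Notation sc := (hscal E).
Notation op := (hopp E).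
Notation z0 := (hzero E).

Definition nsq (x : E) : R := ip x x.
Definition quad (T : E -> E) (x : E) : R := ip (T x) x.

Lemma ip0l (y : E) : ip z0 y = 0.
Proof. assert (H := hinner_add E z0 z0 y). rewrite hadd_zero in H. lra. Qed.
Lemma ip0r (y : E) : ip y z0 = 0.
Proof. rewrite hinner_sym; apply ip0l. Qed.
Lemma ip_addl (x y z : E) : ip (add x y) z = ip x z + ip y z.
Proof. apply hinner_add. Qed.
Lemma ip_addr (x y z : E) : ip z (add x y) = ip z x + ip z y.
Proof. rewrite !(hinner_sym E z). apply hinner_add. Qed.
Lemma ip_scl (a : R) (x y : E) : ip (sc a x) y = a * ip x y.
Proof. apply hinner_scal. Qed.
Lemma ip_scr (a : R) (x y : E) : ip y (sc a x) = a * ip y x.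
Proof. rewrite !(hinner_sym E y). apply hinner_scal. Qed.
Lemma ip_oppl (x y : E) : ip (op x) y = - ip x y.
Proof. assert (H := hinner_add E (op x) x y). rewrite hadd_opp, ip0l in H. lra. Qed.
Lemma ip_oppr (x y : E) : ip y (op x) = - ip y x.
Proof. rewrite !(hinner_sym E y). apply ip_oppl. Qed.
Lemma ip_subl (x y z : E) : ip (hsub x y) z = ip x z - ip y z.
Proof. unfold hsub. rewrite ip_addl, ip_oppl. ring. Qed.
Lemma ip_subr (x y z : E) : ip z (hsub x y) = ip z x - ip z y.
Proof. unfold hsub. rewrite ip_addr, ip_oppr. ring. Qed.

(** Vectors are determined by their inner products; together with
    bilinearity this turns every vector identity into a ring identity. *)
Lemma vec_ext (x y : E) : (forall z, ip x z = ip y z) -> x = y.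
Proof.
  intro H.
  assert (Hxy : hsub x y = z0) by (apply hinner_def; rewrite ip_subl, !H; ring).
  unfold hsub in Hxy.
  assert (Hx : add x z0 = x) by (rewrite hadd_comm; apply hadd_zero).
  rewrite <- Hx, <- (hadd_opp E y), hadd_assoc, Hxy, hadd_zero. reflexivity.
Qed.

Ltac ipsimpl := repeat rewrite ?ip_addl, ?ip_addr, ?ip_scl, ?ip_scr, ?ip_oppl, ?ip_oppr,
   ?ip_subl, ?ip_subr, ?ip0l, ?ip0r.
Ltac ipsimpl_in H := repeat rewrite ?ip_addl, ?ip_addr, ?ip_scl, ?ip_scr, ?ip_oppl, ?ip_oppr,
   ?ip_subl, ?ip_subr, ?ip0l, ?ip0r in H.
Ltac vecsolve := apply vec_ext; intro; ipsimpl; ring.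

Lemma nsq_ge0 (x : E) : 0 <= nsq x.
Proof. apply hinner_pos. Qed.
Lemma nsq_eq0 (x : E) : nsq x = 0 -> x = z0.
Proof. apply hinner_def. Qed.
Lemma nsq_pos (x : E) : x <> z0 -> 0 < nsq x.
Proof.
  intro H. destruct (Rle_lt_or_eq_dec _ _ (nsq_ge0 x)) as [|e]; auto.
  symmetry in e. apply nsq_eq0 in e. contradiction.
Qed.
Lemma nsq_scal (a : R) (x : E) : nsq (sc a x) = a * a * nsq x.
Proof. unfold nsq; ipsimpl; ring. Qed.

Lemma hnorm_ge0 (x : E) : 0 <= hnorm x.
Proof. apply sqrt_pos. Qed.
Lemma hnorm_sq (x : E) : hnorm x * hnorm x = nsq x.
Proof. unfold hnorm. apply sqrt_sqrt, nsq_ge0. Qed.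
Lemma hnorm_eq0 (x : E) : hnorm x = 0 -> x = z0.
Proof. intro H. apply nsq_eq0. rewrite <- hnorm_sq, H. ring. Qed.
Lemma hnorm_pos (x : E) : x <> z0 -> 0 < hnorm x.
Proof.
  intro H. destruct (Rle_lt_or_eq_dec _ _ (hnorm_ge0 x)) as [|e]; auto.
  symmetry in e. apply hnorm_eq0 in e. contradiction.
Qed.
Lemma hnorm0 : hnorm z0 = 0.
Proof. unfold hnorm. rewrite ip0l. apply sqrt_0. Qed.
Lemma hnorm_scal (a : R) (x : E) : hnorm (sc a x) = Rabs a * hnorm x.
Proof.
  unfold hnorm. change (ip (sc a x) (sc a x)) with (nsq (sc a x)).
  rewrite nsq_scal, sqrt_mult_alt by apply Rle_0_sqr.
  change (a * a) with (Rsqr a). rewrite sqrt_Rsqr_abs. reflexivity.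
Qed.
Lemma hnorm_sub_sym (x y : E) : hnorm (hsub x y) = hnorm (hsub y x).
Proof. unfold hnorm. ipsimpl. f_equal. rewrite (hinner_sym E x y). ring. Qed.

Lemma hnorm_normalize (x : E) : x <> z0 -> hnorm (sc (/ hnorm x) x) = 1.
Proof.
  intro Hx. assert (Hn := hnorm_pos x Hx).
  rewrite hnorm_scal, Rabs_right by (left; apply Rinv_0_lt_compat; lra). field. lra.
Qed.

Lemma cauchy_schwarz_sq (x y : E) : ip x y * ip x y <= nsq x * nsq y.
Proof.
  apply quadratic_discriminant; [apply nsq_ge0|].
  intro t. assert (H := nsq_ge0 (hsub x (sc t y))). unfold nsq in *. ipsimpl_in H.
  rewrite (hinner_sym E y x) in H. nra.
Qed.
Lemma cauchy_schwarz (x y : E) : Rabs (ip x y) <= hnorm x * hnorm y.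
Proof.
  apply sqr_le_le; [apply Rmult_le_pos; apply hnorm_ge0|].
  rewrite <- Rabs_mult, Rabs_right by (apply Rle_ge; nra).
  replace (hnorm x * hnorm y * (hnorm x * hnorm y))
    with (hnorm x * hnorm x * (hnorm y * hnorm y)) by ring.
  rewrite !hnorm_sq. apply cauchy_schwarz_sq.
Qed.
Lemma cauchy_schwarz_upper (x y : E) : ip x y <= hnorm x * hnorm y.
Proof. assert (H := cauchy_schwarz x y). assert (H2 := Rle_abs (ip x y)). lra. Qed.
Lemma cauchy_schwarz_lower (x y : E) : - (hnorm x * hnorm y) <= ip x y.
Proof.
  assert (H := cauchy_schwarz x y). assert (H2 := Rle_abs (- ip x y)).
  rewrite Rabs_Ropp in H2. lra.
Qed.

Lemma hnorm_triangle (x y : E) : hnorm (add x y) <= hnorm x + hnorm y.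
Proof.
  apply sqr_le_le; [generalize (hnorm_ge0 x) (hnorm_ge0 y); lra|].
  rewrite hnorm_sq. unfold nsq. ipsimpl.
  assert (H := cauchy_schwarz_upper x y). rewrite (hinner_sym E y x).
  assert (Hx := hnorm_sq x). assert (Hy := hnorm_sq y). unfold nsq in *. nra.
Qed.
Lemma hnorm_triangle_sub (x y z : E) : hnorm (hsub x z) <= hnorm (hsub x y) + hnorm (hsub y z).
Proof. replace (hsub x z) with (add (hsub x y) (hsub y z)) by vecsolve. apply hnorm_triangle. Qed.
Lemma hnorm_sub_le (x y : E) : hnorm (hsub x y) <= hnorm x + hnorm y.
Proof.
  unfold hsub. replace (hnorm y) with (hnorm (op y)) by (unfold hnorm; ipsimpl; f_equal; ring).
  apply hnorm_triangle.
Qed.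
Lemma hnorm_reverse (x y : E) : hnorm x - hnorm y <= hnorm (hsub x y).
Proof.
  assert (H := hnorm_triangle (hsub x y) y).
  replace (add (hsub x y) y) with x in H by vecsolve. lra.
Qed.

Lemma nsq_close (x y : E) (eps : R) :
  0 <= eps <= 1 / 2 -> hnorm (hsub y x) <= eps * hnorm x -> nsq x / 4 <= nsq y /\ nsq y <= 4 * nsq x.
Proof.
  intros He Hd. rewrite <- !hnorm_sq.
  assert (H1 := hnorm_reverse x y). assert (H2 := hnorm_reverse y x).
  rewrite hnorm_sub_sym in H1.
  assert (Hx := hnorm_ge0 x). assert (Hy := hnorm_ge0 y).
  assert (eps * hnorm x <= hnorm x / 2) by nra.
  split; nra.
Qed.

Lemma limit_orthogonal (u : nat -> E) (l g : E) :
  converges u l -> (forall m, ip (u m) g = 0) -> ip l g = 0.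
Proof.
  intros Hc Hu. apply NNPP. intro Hne.
  assert (Hp : 0 < Rabs (ip l g)) by (apply Rabs_pos_lt; auto).
  assert (Hg := hnorm_ge0 g).
  destruct (Hc (Rabs (ip l g) / (hnorm g + 1))) as [N HN]; [apply Rdiv_lt_0_compat; lra|].
  specialize (HN N (le_n _)).
  assert (Heq : ip l g = - ip (hsub (u N) l) g) by (ipsimpl; rewrite Hu; ring).
  assert (H1 := cauchy_schwarz (hsub (u N) l) g). rewrite Heq, Rabs_Ropp in *.
  set (a := Rabs (ip (hsub (u N) l) g)) in *.
  assert (hnorm (hsub (u N) l) * hnorm g <= a / (hnorm g + 1) * hnorm g)
    by (apply Rmult_le_compat_r; lra).
  assert (a / (hnorm g + 1) * hnorm g < a).
  { apply Rmult_lt_reg_l with (hnorm g + 1); [lra|].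
    replace ((hnorm g + 1) * (a / (hnorm g + 1) * hnorm g)) with (a * hnorm g) by (field; lra).
    nra. }
  lra.
Qed.

Lemma lin_add (f : E -> E) (x y : E) : is_linear f -> f (add x y) = add (f x) (f y).
Proof. intros Hl. apply (proj1 Hl). Qed.
Lemma lin_scal (f : E -> E) (a : R) (x : E) : is_linear f -> f (sc a x) = sc a (f x).
Proof. intros Hl. apply (proj2 Hl). Qed.
Lemma lin_zero (f : E -> E) : is_linear f -> f z0 = z0.
Proof.
  intros Hl. replace z0 with (sc 0 z0) by vecsolve. rewrite lin_scal by auto. vecsolve.
Qed.
Lemma lin_sub (f : E -> E) (x y : E) : is_linear f -> f (hsub x y) = hsub (f x) (f y).
Proof.
  intros Hl. replace (hsub x y) with (add x (sc (-1) y)) by vecsolve.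
  rewrite lin_add, lin_scal by auto. vecsolve.
Qed.

Lemma bounded_op_bound (f : E -> E) :
  bounded_op f -> exists M, 0 <= M /\ forall x, hnorm (f x) <= M * hnorm x.
Proof.
  intros [_ [C HC]]. exists (Rmax C 0). split; [apply Rmax_r|].
  intro x. specialize (HC x). assert (H0 := hnorm_ge0 x).
  assert (C * hnorm x <= Rmax C 0 * hnorm x) by (apply Rmult_le_compat_r; auto; apply Rmax_l).
  lra.
Qed.

Lemma opnorm_lt_bound (A : E -> E) (eps : R) :
  opnorm_lt A eps -> forall x, hnorm (A x) <= eps * hnorm x.
Proof. intros [c [Hc H]] x. specialize (H x). assert (H0 := hnorm_ge0 x). nra. Qed.

Lemma bounded_comp (f g : E -> E) :
  bounded_op f -> bounded_op g -> bounded_op (fun x => f (g x)).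
Proof.
  intros Hf Hg. split.
  - destruct Hf as [Hfl _], Hg as [Hgl _].
    split; intros; [rewrite (lin_add g), (lin_add f) | rewrite (lin_scal g), (lin_scal f)]; auto.
  - destruct (bounded_op_bound f Hf) as [M1 [HM1 H1]].
    destruct (bounded_op_bound g Hg) as [M2 [HM2 H2]].
    exists (M1 * M2). intro x. eapply Rle_trans; [apply H1|].
    rewrite Rmult_assoc. apply Rmult_le_compat_l; auto.
Qed.

Lemma bounded_sub (f g : E -> E) :
  bounded_op f -> bounded_op g -> bounded_op (fun x => hsub (f x) (g x)).
Proof.
  intros Hf Hg. split.
  - destruct Hf as [Hfl _], Hg as [Hgl _].
    split; intros; [rewrite (lin_add f), (lin_add g) | rewrite (lin_scal f), (lin_scal g)];
      auto; vecsolve.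
  - destruct (bounded_op_bound f Hf) as [M1 [HM1 H1]].
    destruct (bounded_op_bound g Hg) as [M2 [HM2 H2]].
    exists (M1 + M2). intro x. eapply Rle_trans; [apply hnorm_sub_le|].
    specialize (H1 x). specialize (H2 x). lra.
Qed.

Definition subspace (V : E -> Prop) : Prop :=
  V z0 /\ (forall x y, V x -> V y -> V (add x y)) /\ (forall a x, V x -> V (sc a x)).

Lemma closed_subspace_subspace (V : E -> Prop) : closed_subspace V -> subspace V.
Proof. intros [? [? [? _]]]. repeat split; auto. Qed.

Lemma subspace_sub (V : E -> Prop) (x y : E) : subspace V -> V x -> V y -> V (hsub x y).
Proof.
  intros [H0 [Ha Hs]] Hx Hy. replace (hsub x y) with (add x (sc (-1) y)) by vecsolve. auto.
Qed.

Lemma lincomb_ip (v : nat -> E) (c : nat -> R) (k : nat) (y : E) :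
  ip (lincomb v c k) y = rsum (fun i => c i * ip (v i) y) k.
Proof. induction k; simpl; [apply ip0l|]. ipsimpl. rewrite IHk. ring. Qed.
Lemma ip_lincomb (v : nat -> E) (c : nat -> R) (k : nat) (y : E) :
  ip y (lincomb v c k) = rsum (fun i => c i * ip y (v i)) k.
Proof. rewrite hinner_sym, lincomb_ip. apply rsum_ext. intros. rewrite hinner_sym; auto. Qed.

Lemma lincomb_ext (v v' : nat -> E) (c c' : nat -> R) (k : nat) :
  (forall i, (i < k)%nat -> v i = v' i) -> (forall i, (i < k)%nat -> c i = c' i) ->
  lincomb v c k = lincomb v' c' k.
Proof. induction k; simpl; intros Hv Hc; auto. rewrite IHk, Hv, Hc; auto. Qed.

Lemma lincomb_linear (f : E -> E) (v : nat -> E) (c : nat -> R) (k : nat) :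
  is_linear f -> f (lincomb v c k) = lincomb (fun i => f (v i)) c k.
Proof.
  intro Hl. induction k; simpl; [apply lin_zero; auto|].
  rewrite lin_add, lin_scal, IHk; auto.
Qed.

Lemma lincomb_in (V : E -> Prop) (v : nat -> E) (c : nat -> R) (k : nat) :
  subspace V -> (forall i, (i < k)%nat -> V (v i)) -> V (lincomb v c k).
Proof.
  intros [H0 [Ha Hs]] Hv. induction k; simpl; auto.
  apply Ha; [apply IHk; intros; apply Hv; lia | apply Hs, Hv; lia].
Qed.

Lemma lincomb_zero_coef (v : nat -> E) (c : nat -> R) (k : nat) :
  (forall i, (i < k)%nat -> c i = 0) -> lincomb v c k = z0.
Proof. induction k; simpl; intros H; auto. rewrite IHk, H by auto. vecsolve. Qed.

Lemma lincomb_scal (v : nat -> E) (c : nat -> R) (r : R) (k : nat) :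
  lincomb v (fun i => r * c i) k = sc r (lincomb v c k).
Proof. induction k; simpl; [vecsolve|]. rewrite IHk. vecsolve. Qed.

Lemma lincomb_app (v : nat -> E) (c : nat -> R) (n m : nat) :
  lincomb v c (n + m) =
  add (lincomb v c n) (lincomb (fun i => v (n + i)%nat) (fun i => c (n + i)%nat) m).
Proof.
  induction m; simpl; [rewrite Nat.add_0_r; vecsolve|].
  rewrite Nat.add_succ_r. simpl. rewrite IHm. vecsolve.
Qed.

Definition concat_family (w z : nat -> E) (n : nat) (i : nat) : E :=
  if Nat.ltb i n then w i else z (i - n)%nat.

Lemma lincomb_concat (w z : nat -> E) (c : nat -> R) (n d : nat) :
  lincomb (concat_family w z n) c (n + d) =
  add (lincomb w c n) (lincomb z (fun j => c (n + j)%nat) d).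
Proof.
  rewrite lincomb_app. f_equal; apply lincomb_ext; auto; intros i Hi; unfold concat_family.
  - rewrite (proj2 (Nat.ltb_lt i n)); auto.
  - rewrite (proj2 (Nat.ltb_ge (n + i) n)) by lia. f_equal; lia.
Qed.

Lemma lincomb_truncate (v : nat -> E) (c : nat -> R) (j k : nat) : (j <= k)%nat ->
  lincomb v (fun i => if Nat.ltb i j then c i else 0) k = lincomb v c j.
Proof.
  intro Hjk. replace k with (j + (k - j))%nat by lia. rewrite lincomb_app.
  rewrite (lincomb_zero_coef _ _ (k - j)).
  - replace (add (lincomb v (fun i => if Nat.ltb i j then c i else 0) j) z0)
      with (lincomb v (fun i => if Nat.ltb i j then c i else 0) j) by vecsolve.
    apply lincomb_ext; auto. intros i Hi. rewrite (proj2 (Nat.ltb_lt i j)); auto.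
  - intros i Hi. rewrite (proj2 (Nat.ltb_ge (j + i) j)) by lia. auto.
Qed.

Section Projection.
Variables (V : E -> Prop) (p : E -> E).
Hypothesis HV : subspace V.
Hypothesis Hp : is_orth_proj V p.

Lemma proj_in (x : E) : V (p x).
Proof. apply Hp. Qed.
Lemma proj_orth (x y : E) : V y -> ip (hsub x (p x)) y = 0.
Proof. apply Hp. Qed.

Lemma proj_unique (x a : E) : V a -> (forall y, V y -> ip (hsub x a) y = 0) -> p x = a.
Proof.
  intros Ha H.
  assert (Hd : hsub (p x) a = z0).
  { apply nsq_eq0. unfold nsq.
    assert (Hv : V (hsub (p x) a)) by (apply subspace_sub; auto; apply proj_in).
    replace (hsub (p x) a) with (hsub (hsub x a) (hsub x (p x))) at 1 by vecsolve.
    rewrite ip_subl, H, proj_orth; auto. ring. }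
  apply vec_ext; intro z. assert (H1 := f_equal (fun w => ip w z) Hd). simpl in H1.
  ipsimpl_in H1. lra.
Qed.

Lemma proj_id (x : E) : V x -> p x = x.
Proof. intro Hx. apply proj_unique; auto. intros. unfold hsub. ipsimpl. ring. Qed.

Lemma proj_linear : is_linear p.
Proof.
  destruct HV as [_ [Ha Hs]]. split; intros.
  - apply proj_unique; [apply Ha; apply proj_in|].
    intros w Hw. replace (hsub (add x y) (add (p x) (p y)))
      with (add (hsub x (p x)) (hsub y (p y))) by vecsolve.
    rewrite ip_addl, !proj_orth; auto. ring.
  - apply proj_unique; [apply Hs; apply proj_in|].
    intros w Hw. replace (hsub (sc a x) (sc a (p x))) with (sc a (hsub x (p x))) by vecsolve.
    rewrite ip_scl, proj_orth; auto. ring.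
Qed.

Lemma proj_symmetric (x y : E) : ip (p x) y = ip x (p y).
Proof.
  assert (H1 := proj_orth y (p x) (proj_in x)).
  assert (H2 := proj_orth x (p y) (proj_in y)).
  ipsimpl_in H1. ipsimpl_in H2.
  rewrite (hinner_sym E y (p x)), (hinner_sym E (p y) (p x)) in H1. lra.
Qed.

Lemma proj_ip_in (u x : E) : V x -> ip (p u) x = ip u x.
Proof. intro Hx. rewrite proj_symmetric, proj_id; auto. Qed.

Lemma proj_norm (x : E) : hnorm (p x) <= hnorm x.
Proof.
  apply sqr_le_le; [apply hnorm_ge0|]. rewrite !hnorm_sq.
  assert (H1 := proj_orth x (p x) (proj_in x)).
  assert (H2 := nsq_ge0 (hsub x (p x))). unfold nsq in *. ipsimpl_in H1. ipsimpl_in H2.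
  rewrite (hinner_sym E (p x) x) in *. lra.
Qed.

Lemma proj_bounded : bounded_op p.
Proof. split; [apply proj_linear|]. exists 1. intro. rewrite Rmult_1_l. apply proj_norm. Qed.

End Projection.

Lemma proj_close (V : E -> Prop) (p p' : E -> E) (eps : R) (x : E) :
  subspace V -> is_orth_proj V p -> (forall y, hnorm (hsub (p' y) (p y)) <= eps * hnorm y) -> V x ->
  hnorm (hsub (p' x) x) <= eps * hnorm x.
Proof. intros HV Hp Hd Hx. rewrite <- (proj_id V p HV Hp x Hx) at 2. apply Hd. Qed.

Definition orth_to (ys : list E) (x : E) : Prop := forall y, In y ys -> ip x y = 0.

Lemma orth_to_subspace (ys : list E) : subspace (orth_to ys).
Proof.
  split; [|split]; unfold orth_to; intros; ipsimpl; [ring| |];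
    repeat match goal with H : forall y, In y ys -> _ |- _ => rewrite H by auto end; ring.
Qed.

Lemma lincomb_unit (v : nat -> E) (k : nat) :
  lincomb v (fun i => if Nat.eqb i k then 1 else 0) (S k) = v k.
Proof.
  simpl. rewrite lincomb_zero_coef, Nat.eqb_refl; [vecsolve|].
  intros i Hi. destruct (Nat.eqb_spec i k); [lia | auto].
Qed.

Lemma lincomb_shift (v : nat -> E) (u : E) (a c : nat -> R) (k : nat) :
  lincomb (fun i => hsub (v i) (sc (a i) u)) c k =
  hsub (lincomb v c k) (sc (rsum (fun i => c i * a i) k) u).
Proof. induction k; simpl; [vecsolve|]. rewrite IHk. vecsolve. Qed.

(** Gaussian elimination of the last vector: a combination of the vectors
    [v i - b i v k] is a combination of [v 0 .. v k]. *)
Lemma lincomb_eliminate (v : nat -> E) (b c : nat -> R) (k : nat) :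
  lincomb v (fun i => if Nat.ltb i k then c i else - rsum (fun i => c i * b i) k) (S k) =
  lincomb (fun i => hsub (v i) (sc (b i) (v k))) c k.
Proof.
  simpl. rewrite lincomb_shift, Nat.ltb_irrefl, (lincomb_ext v v _ c k); auto; [vecsolve|].
  intros i Hi. rewrite (proj2 (Nat.ltb_lt i k)); auto.
Qed.

(** Induction on [k], eliminating [v k] against one violated constraint. *)
Lemma orthogonal_combination : forall (k : nat) (ys : list E) (v : nat -> E),
  (length ys < k)%nat ->
  exists c : nat -> R, (exists i, (i < k)%nat /\ c i <> 0) /\ orth_to ys (lincomb v c k).
Proof.
  induction k as [|k IH]; intros ys v Hl; [lia|].
  destruct (classic (orth_to ys (v k))) as [Hvk | Hvk].
  - exists (fun i => if Nat.eqb i k then 1 else 0). rewrite lincomb_unit. split; auto.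
    exists k. rewrite Nat.eqb_refl. split; [lia | lra].
  - apply not_all_ex_not in Hvk. destruct Hvk as [y0 Hvk].
    apply imply_to_and in Hvk. destruct Hvk as [Hin Hb].
    apply in_split in Hin. destruct Hin as [l1 [l2 ->]].
    set (b := fun i => ip (v i) y0 / ip (v k) y0).
    destruct (IH (l1 ++ l2) (fun i => hsub (v i) (sc (b i) (v k)))) as [c [[i0 [Hi0 Hc0]] Hc]].
    { rewrite length_app in *. simpl in Hl. lia. }
    exists (fun i => if Nat.ltb i k then c i else - rsum (fun i => c i * b i) k). split.
    + exists i0. rewrite (proj2 (Nat.ltb_lt i0 k)) by auto. split; [lia | auto].
    + rewrite lincomb_eliminate. intros y Hy.
      apply in_app_or in Hy. destruct Hy as [Hy | [<- | Hy]]; [apply Hc, in_or_app; auto | |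
        apply Hc, in_or_app; auto].
      rewrite lincomb_ip. apply rsum_zero. intros i Hi. unfold b. ipsimpl. field. auto.
Qed.

Lemma semidefinite_cauchy_schwarz (V : E -> Prop) (P : E -> E) :
  subspace V -> is_linear P ->
  (forall x y, V x -> V y -> ip (P x) y = ip x (P y)) -> (forall x, V x -> 0 <= quad P x) ->
  forall x y, V x -> V y -> ip (P x) y * ip (P x) y <= quad P x * quad P y.
Proof.
  intros HV Hl Hs Hp x y Hx Hy. apply quadratic_discriminant; [apply Hp; auto|].
  intro t. assert (Hv : V (hsub x (sc t y))) by (apply subspace_sub; auto; apply HV; auto).
  specialize (Hp _ Hv). unfold quad in *. rewrite lin_sub, lin_scal in Hp by auto.
  ipsimpl_in Hp. rewrite (Hs y x), (hinner_sym E y (P x)) in Hp by auto. lra.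
Qed.

(** Indeed
    [||P x||^2 <= M <P x, x>] by Cauchy-Schwarz, and [||x|| <= N ||P x||]. *)
Lemma positive_invertible_coercive (V : E -> Prop) (P Q : E -> E) :
  subspace V -> bounded_op P -> bounded_op Q -> (forall x, V x -> V (P x)) ->
  (forall x y, V x -> V y -> ip (P x) y = ip x (P y)) ->
  (forall x, V x -> x <> z0 -> 0 < quad P x) -> (forall x, V x -> Q (P x) = x) ->
  exists alpha, 0 < alpha /\ forall x, V x -> alpha * nsq x <= quad P x.
Proof.
  intros HV HP HQ HPV Hs Hpos HQP.
  assert (Hp0 : forall x, V x -> 0 <= quad P x).
  { intros x Hx. destruct (classic (x = z0)) as [->|Hx0]; [|apply Rlt_le; auto].
    unfold quad. rewrite ip0r; lra. }
  destruct (bounded_op_bound P HP) as [M [HM HMb]].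
  destruct (bounded_op_bound Q HQ) as [N [HN HNb]].
  exists (/ (N * N * M + 1)). split; [apply Rinv_0_lt_compat; nra|].
  intros x Hx. assert (Hb := Hp0 x Hx).
  assert (H1 := semidefinite_cauchy_schwarz V P HV (proj1 HP) Hs Hp0 x (P x) Hx (HPV x Hx)).
  assert (H2 : quad P (P x) <= M * nsq (P x)).
  { unfold quad. eapply Rle_trans; [apply cauchy_schwarz_upper|]. rewrite <- hnorm_sq.
    assert (H3 := HMb (P x)). generalize (hnorm_ge0 (P x)) (hnorm_ge0 (P (P x))). nra. }
  assert (H4 : nsq (P x) <= M * quad P x).
  { change (ip (P x) (P x)) with (nsq (P x)) in H1.
    assert (H0 := nsq_ge0 (P x)).
    destruct (Rle_lt_or_eq_dec 0 (nsq (P x)) H0) as [Hlt | <-]; [|nra].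
    assert (nsq (P x) * nsq (P x) <= M * quad P x * nsq (P x)) by nra. nra. }
  assert (H5 : nsq x <= N * N * nsq (P x)).
  { rewrite <- (HQP x Hx) at 1. rewrite <- !hnorm_sq.
    assert (H6 := HNb (P x)). generalize (hnorm_ge0 (P x)) (hnorm_ge0 (Q (P x))). nra. }
  apply Rmult_le_reg_l with (N * N * M + 1); [nra|].
  rewrite <- Rmult_assoc, Rinv_r by nra. nra.
Qed.

Lemma compact_no_separated (V : E -> Prop) (K : E -> E) (x : nat -> E) (delta : R) :
  compact_on V K -> 0 < delta -> (forall k, V (x k)) -> (forall k, hnorm (x k) <= 1) ->
  (forall j k, (j < k)%nat -> delta <= hnorm (hsub (K (x k)) (K (x j)))) -> False.
Proof.
  intros Hc Hd HxV Hx1 Hsep.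
  destruct (Hc x HxV) as [phi [Hphi [l Hl]]]; [exists 1; auto|].
  destruct (Hl (delta / 2)) as [N HN]; [lra|].
  assert (H1 := HN N (le_n _)). assert (H2 := HN (S N) (le_S _ _ (le_n _))). cbv beta in H1, H2.
  assert (H3 := hnorm_triangle_sub (K (x (phi (S N)))) l (K (x (phi N)))).
  rewrite (hnorm_sub_sym l) in H3.
  assert (H4 := Hsep _ _ (Hphi N)). lra.
Qed.

(** Otherwise one builds
    unit vectors [x k] with [||K x k|| > delta] and [K x k] orthogonal to all
    earlier [K x j], contradicting [compact_no_separated]. *)
Lemma compact_small_off_finite (V : E -> Prop) (K : E -> E) (delta : R) :
  subspace V -> bounded_op K -> (forall x, V x -> V (K x)) ->
  (forall x y, V x -> V y -> ip (K x) y = ip x (K y)) -> compact_on V K -> 0 < delta ->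
  exists ys : list E, forall x, V x -> orth_to ys x -> hnorm (K x) <= delta * hnorm x.
Proof.
  intros HV HK HKV Hs Hc Hd. apply NNPP. intro Hneg.
  assert (Hbad : forall ys : list E, exists x,
             V x /\ orth_to ys x /\ hnorm x = 1 /\ delta < hnorm (K x)).
  { intro ys. apply NNPP. intro Hn. apply Hneg. exists ys. intros x Hx Hy.
    apply Rnot_lt_le. intro Hlt.
    assert (Hx0 : x <> z0).
    { intros ->. rewrite lin_zero, hnorm0 in Hlt by apply HK. lra. }
    assert (Hnx := hnorm_pos x Hx0).
    apply Hn. exists (sc (/ hnorm x) x). repeat split.
    - apply HV; auto.
    - apply orth_to_subspace; auto.
    - apply hnorm_normalize; auto.
    - rewrite lin_scal, hnorm_scal, Rabs_right by
        (apply HK || (left; apply Rinv_0_lt_compat; auto)).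
      apply Rmult_lt_reg_l with (hnorm x); auto.
      rewrite <- Rmult_assoc, Rinv_r by lra. lra. }
  apply choice in Hbad. destruct Hbad as [f Hf].
  set (constraints := fix g (k : nat) : list E :=
         match k with O => nil | S k' => K (K (f (g k'))) :: g k' end).
  set (x := fun k => f (constraints k)).
  assert (Hin : forall j k, (j < k)%nat -> In (K (K (x j))) (constraints k)).
  { intros j k. induction k; intros Hjk; [lia|]. simpl.
    destruct (Nat.eq_dec j k) as [->|]; [left; auto | right; apply IHk; lia]. }
  assert (Horth : forall j k, (j < k)%nat -> ip (K (x k)) (K (x j)) = 0).
  { intros j k Hjk. destruct (Hf (constraints k)) as [Hxk [Hok _]].
    rewrite Hs by (apply Hxk || apply HKV, Hf). apply Hok, Hin; auto. }
  apply (compact_no_separated V K x delta Hc Hd); [intro k; apply Hf | intro k; right; apply Hf|].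
  intros j k Hjk. apply sqr_le_le; [apply hnorm_ge0|].
  rewrite hnorm_sq. unfold nsq. ipsimpl.
  rewrite (hinner_sym E (K (x j)) (K (x k))), (Horth j k Hjk).
  destruct (Hf (constraints k)) as [_ [_ [_ Hk]]]. destruct (Hf (constraints j)) as [_ [_ [_ Hj]]].
  assert (Hkk := hnorm_sq (K (x k))). assert (Hjj := hnorm_sq (K (x j))).
  unfold nsq in *. fold (x k) in Hk. fold (x j) in Hj. nra.
Qed.

Record ess_pos_split (T : E -> E) (V : E -> Prop) (P K : E -> E) (alpha : R) : Prop := {
  split_T : bounded_op T;
  split_Tsym : forall x y, ip (T x) y = ip x (T y);
  split_V : closed_subspace V;
  split_K : bounded_op K;
  split_KV : forall x, V x -> V (K x);
  split_Ksym : forall x y, V x -> V y -> ip (K x) y = ip x (K y);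
  split_Kcompact : compact_on V K;
  split_alpha : 0 < alpha;
  split_coercive : forall x, V x -> alpha * nsq x <= quad P x;
  split_sum : forall x y, V x -> V y -> ip (T x) y = ip (P x) y + ip (K x) y
}.

Lemma in_A_split (T : E -> E) (V : E -> Prop) :
  in_A T V -> exists P K alpha, ess_pos_split T V P K alpha.
Proof.
  intros [[HT HTs] [HV [P [K [HP [HK [HPV [HKV [HPs [[Q [HQ [HQV HQP]]] [Hpos [Hc Hdec]]]]]]]]]]]].
  destruct (positive_invertible_coercive V P Q (closed_subspace_subspace V HV) HP HQ HPV HPs Hpos)
    as [alpha [Ha Hco]]; [intros; apply HQP; auto|].
  exists P, K, alpha. constructor; auto.
  - intros x y Hx Hy. assert (H1 := Hdec x y Hx Hy). assert (H2 := Hdec y x Hy Hx).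
    rewrite ip_addl in H1, H2. rewrite HTs, (hinner_sym E x (T y)), HPs,
      (hinner_sym E x (P y)) in H1 by auto.
    rewrite (hinner_sym E x (K y)). lra.
  - intros x y Hx Hy. rewrite Hdec, ip_addl; auto.
Qed.

Lemma garding (T : E -> E) (V : E -> Prop) (P K : E -> E) (alpha : R) :
  ess_pos_split T V P K alpha ->
  exists ys : list E, forall x, V x -> orth_to ys x -> alpha / 2 * nsq x <= quad T x.
Proof.
  intros HS. assert (Ha := split_alpha _ _ _ _ _ HS).
  destruct (compact_small_off_finite V K (alpha / 2)
              (closed_subspace_subspace V (split_V _ _ _ _ _ HS)) (split_K _ _ _ _ _ HS)
              (split_KV _ _ _ _ _ HS) (split_Ksym _ _ _ _ _ HS) (split_Kcompact _ _ _ _ _ HS))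
    as [ys Hys]; [lra|].
  exists ys. intros x Hx Hy. unfold quad. rewrite (split_sum _ _ _ _ _ HS) by auto.
  specialize (Hys x Hx Hy). assert (H1 := cauchy_schwarz_lower (K x) x).
  assert (H2 := split_coercive _ _ _ _ _ HS x Hx). unfold quad in H2.
  rewrite <- hnorm_sq in *. generalize (hnorm_ge0 x) (hnorm_ge0 (K x)). nra.
Qed.

Lemma ker_lincomb (T : E -> E) (V : E -> Prop) (v : nat -> E) (c : nat -> R) (k : nat) :
  is_linear T -> subspace V -> (forall i, (i < k)%nat -> in_ker T V (v i)) ->
  in_ker T V (lincomb v c k).
Proof.
  intros HT HV Hv. split; [apply lincomb_in; auto; intros i Hi; apply Hv; auto|].
  intros y Hy. rewrite lincomb_linear, lincomb_ip by auto. apply rsum_zero. intros i Hi.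
  rewrite (proj2 (Hv i Hi)); auto. ring.
Qed.

Lemma neg_dim_bounded (T : E -> E) (V : E -> Prop) (ys : list E) (beta : R) :
  subspace V -> (forall x, V x -> orth_to ys x -> beta * nsq x <= quad T x) -> 0 <= beta ->
  ~ neg_dim_ge T V (S (length ys)).
Proof.
  intros HV H Hb [v [Hv Hneg]].
  destruct (orthogonal_combination (S (length ys)) ys v) as [c [Hc Horth]]; [lia|].
  specialize (Hneg c Hc). set (x := lincomb v c (S (length ys))) in *.
  assert (Hx : beta * nsq x <= quad T x) by (apply H; auto; apply lincomb_in; auto).
  assert (Hx0 := nsq_ge0 x). unfold quad in *. nra.
Qed.

Lemma ker_dim_bounded (T : E -> E) (V : E -> Prop) (ys : list E) (beta : R) :
  is_linear T -> subspace V -> (forall x, V x -> orth_to ys x -> beta * nsq x <= quad T x) ->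
  0 < beta -> ~ ker_dim_ge T V (S (length ys)).
Proof.
  intros HT HV H Hb [v [Hv Hind]].
  destruct (orthogonal_combination (S (length ys)) ys v) as [c [[i [Hi Hci]] Horth]]; [lia|].
  assert (Hk := ker_lincomb T V v c (S (length ys)) HT HV Hv).
  set (w := lincomb v c (S (length ys))) in *.
  assert (Hq : quad T w = 0) by (apply (proj2 Hk), Hk).
  assert (beta * nsq w <= quad T w) by (apply H; auto; apply Hk).
  assert (nsq w = 0) by (generalize (nsq_ge0 w); nra).
  apply Hci, (Hind c); auto. apply nsq_eq0; auto.
Qed.

Theorem index_nullity_finite (T : E -> E) (V : E -> Prop) :
  in_A T V -> (exists n, n_minus_eq T V n) /\ (exists d, ker_dim_eq T V d).
Proof.
  intro HA. destruct (in_A_split T V HA) as [P [K [alpha HS]]].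
  destruct (garding _ _ _ _ _ HS) as [ys Hys].
  assert (Ha := split_alpha _ _ _ _ _ HS).
  assert (HV := closed_subspace_subspace V (split_V _ _ _ _ _ HS)).
  split.
  - destruct (last_true_before (neg_dim_ge T V) (S (length ys))) as [n Hn].
    + exists (fun _ => z0). split; [intros; lia | intros c [i [Hi _]]; lia].
    + apply neg_dim_bounded with (alpha / 2); auto; lra.
    + exists n; auto.
  - destruct (last_true_before (ker_dim_ge T V) (S (length ys))) as [n Hn].
    + exists (fun _ => z0). split; [intros; lia | intros c _ i Hi; lia].
    + apply ker_dim_bounded with (alpha / 2); auto; [apply (split_T _ _ _ _ _ HS) | lra].
    + exists n; auto.
Qed.

(** ** Perturbation of quadratic forms *)

Lemma quad_scal (T : E -> E) (a : R) (x : E) : is_linear T -> quad T (sc a x) = a * a * quad T x.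
Proof. intro Hl. unfold quad. rewrite lin_scal by auto. ipsimpl. ring. Qed.

Lemma quad_add_orth (T : E -> E) (x u : E) : is_linear T -> (forall a b, ip (T a) b = ip a (T b)) ->
  ip (T x) u = 0 -> forall s, quad T (add x (sc s u)) = quad T x + s * s * quad T u.
Proof.
  intros Hl Hs Hxu s. unfold quad. rewrite lin_add, lin_scal by auto. ipsimpl.
  rewrite Hxu, (Hs u x), (hinner_sym E u (T x)), Hxu. ring.
Qed.

Lemma nsq_add_le (x y : E) : nsq (add x y) <= 2 * nsq x + 2 * nsq y.
Proof.
  assert (H := nsq_ge0 (hsub x y)). unfold nsq in *. ipsimpl_in H. ipsimpl.
  rewrite (hinner_sym E y x) in *. lra.
Qed.

Lemma quad_vector_close (B : E -> E) (M eps : R) (x y : E) :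
  is_linear B -> (forall a b, ip (B a) b = ip a (B b)) -> 0 <= M ->
  (forall z, hnorm (B z) <= M * hnorm z) -> 0 <= eps <= 1 ->
  hnorm (hsub y x) <= eps * hnorm x -> Rabs (quad B y - quad B x) <= 3 * M * eps * nsq x.
Proof.
  intros Hl Hs HM HB He Hr. set (r := hsub y x) in *.
  replace y with (add x r) by (unfold r; vecsolve). unfold quad.
  rewrite lin_add by auto. ipsimpl. rewrite (Hs r x), (hinner_sym E r (B x)).
  replace (ip (B x) x + ip (B x) r + (ip (B x) r + ip (B r) r) - ip (B x) x)
    with (2 * ip (B x) r + ip (B r) r) by ring.
  assert (H1 := cauchy_schwarz (B x) r). assert (H2 := cauchy_schwarz (B r) r).
  assert (H3 := HB x). assert (H4 := HB r).
  assert (Hx0 := hnorm_ge0 x). assert (Hr0 := hnorm_ge0 r).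
  assert (Hbx := hnorm_ge0 (B x)). assert (Hbr := hnorm_ge0 (B r)).
  assert (Ha : Rabs (ip (B x) r) <= M * eps * nsq x).
  { eapply Rle_trans; [apply H1|]. rewrite <- hnorm_sq.
    apply Rle_trans with ((M * hnorm x) * (eps * hnorm x)); [apply Rmult_le_compat; auto | nra]. }
  assert (Hb : Rabs (ip (B r) r) <= M * eps * nsq x).
  { eapply Rle_trans; [apply H2|]. rewrite <- hnorm_sq.
    assert (hnorm (B r) * hnorm r <= M * (eps * hnorm x) * (eps * hnorm x)).
    { apply Rmult_le_compat; auto. eapply Rle_trans; [apply H4|]. apply Rmult_le_compat_l; auto. }
    assert (Hee : eps * eps <= eps) by nra.
    assert (0 <= M * (hnorm x * hnorm x)) by (apply Rmult_le_pos; nra).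
    nra. }
  eapply Rle_trans; [apply Rabs_triang|]. rewrite Rabs_mult, Rabs_right by lra. lra.
Qed.

Lemma quad_operator_close (A B : E -> E) (eps : R) (x : E) :
  (forall z, hnorm (hsub (A z) (B z)) <= eps * hnorm z) -> 0 <= eps ->
  Rabs (quad A x - quad B x) <= eps * nsq x.
Proof.
  intros H He. unfold quad. rewrite <- ip_subl, <- hnorm_sq.
  eapply Rle_trans; [apply cauchy_schwarz|].
  rewrite <- Rmult_assoc. apply Rmult_le_compat_r; [apply hnorm_ge0 | apply H].
Qed.

Lemma quad_perturb (T T' : E -> E) (M eps : R) (x y : E) :
  is_linear T -> (forall a b, ip (T a) b = ip a (T b)) -> 0 <= M ->
  (forall z, hnorm (T z) <= M * hnorm z) ->
  (forall z, hnorm (hsub (T' z) (T z)) <= eps * hnorm z) -> 0 <= eps <= 1 / 2 ->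
  hnorm (hsub y x) <= eps * hnorm x ->
  Rabs (quad T' y - quad T x) <= (3 * M + 4) * eps * nsq x /\
  Rabs (quad T' x - quad T y) <= (3 * M + 4) * eps * nsq x.
Proof.
  intros Hl Hs HM HB HT He Hd.
  assert (Hv := quad_vector_close T M eps x y Hl Hs HM HB ltac:(lra) Hd).
  assert (Hox := quad_operator_close T' T eps x HT ltac:(lra)).
  assert (Hoy := quad_operator_close T' T eps y HT ltac:(lra)).
  assert (Hny := proj2 (nsq_close x y eps He Hd)).
  assert (Hnx := nsq_ge0 x).
  assert (eps * nsq y <= 4 * eps * nsq x) by nra.
  assert (0 <= eps * nsq x) by nra.
  split; [replace (quad T' y - quad T x) with ((quad T' y - quad T y) + (quad T y - quad T x)) by ring
         |replace (quad T' x - quad T y) with ((quad T' x - quad T x) - (quad T y - quad T x)) by ring];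
    (eapply Rle_trans; [apply Rabs_triang|]); rewrite ?Rabs_Ropp; lra.
Qed.

(** ** Lower semicontinuity of the negative index *)

(** Induction
    on [k]: split off [u = v k] and its [T]-orthogonal complement in the span,
    on which the form is diagonal. *)
Lemma negative_definite_uniform (T : E -> E) :
  is_linear T -> (forall a b, ip (T a) b = ip a (T b)) ->
  forall (k : nat) (v : nat -> E),
  (forall c, (exists i, (i < k)%nat /\ c i <> 0) -> quad T (lincomb v c k) < 0) ->
  exists beta, 0 < beta /\ forall c, quad T (lincomb v c k) <= - beta * nsq (lincomb v c k).
Proof.
  intros Hl Hs. induction k as [|k IH]; intros v Hneg.
  { exists 1. split; [lra|]. intro c. simpl. unfold quad, nsq. rewrite ip0r, ip0l. lra. }
  set (u := v k).
  assert (Hqu : quad T u < 0).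
  { assert (H := Hneg (fun i => if Nat.eqb i k then 1 else 0)). rewrite lincomb_unit in H.
    apply H. exists k. rewrite Nat.eqb_refl. split; [lia | lra]. }
  assert (Hnu : 0 < nsq u).
  { apply nsq_pos. intros Hu. unfold quad in Hqu. rewrite Hu, ip0r in Hqu. lra. }
  set (b := fun i => ip (T (v i)) u / quad T u).
  set (v' := fun i => hsub (v i) (sc (b i) u)).
  assert (Horth : forall c, ip (T (lincomb v' c k)) u = 0).
  { intro c. rewrite lincomb_linear, lincomb_ip by auto. apply rsum_zero. intros i Hi.
    unfold v', b. rewrite lin_sub, lin_scal by auto. ipsimpl. unfold quad in *. field. lra. }
  destruct (IH v') as [beta' [Hb' Hv']].
  { intros c [i [Hi Hci]]. unfold v', u. rewrite <- lincomb_eliminate. apply Hneg.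
    exists i. rewrite (proj2 (Nat.ltb_lt i k)) by auto. split; [lia | auto]. }
  set (gam := - quad T u / nsq u).
  assert (Hgam : 0 < gam) by (apply Rdiv_lt_0_compat; lra).
  assert (Hqu' : quad T u = - gam * nsq u) by (unfold gam; field; lra).
  set (m := Rmin beta' gam).
  assert (Hm0 : 0 < m) by (apply Rmin_glb_lt; auto).
  assert (Hm1 : m <= beta') by apply Rmin_l. assert (Hm2 : m <= gam) by apply Rmin_r.
  exists (m / 2). split; [lra|]. intro c.
  set (x' := lincomb v' c k). set (s := c k + rsum (fun i => c i * b i) k).
  assert (Hd : lincomb v c (S k) = add x' (sc s u)).
  { simpl. unfold x', v'. rewrite lincomb_shift. unfold s, u. vecsolve. }
  rewrite Hd, (quad_add_orth T x' u Hl Hs (Horth c)), Hqu'.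
  specialize (Hv' c). fold x' in Hv'.
  assert (Hn := nsq_add_le x' (sc s u)). rewrite nsq_scal in Hn.
  assert (H0 := nsq_ge0 x'). assert (Hss : 0 <= s * s) by nra.
  assert (m * nsq x' <= beta' * nsq x') by nra.
  assert (m * (s * s * nsq u) <= gam * (s * s * nsq u)) by (apply Rmult_le_compat_r; nra).
  nra.
Qed.

Lemma neg_dim_ge_mono (T : E -> E) (V : E -> Prop) (j k : nat) :
  neg_dim_ge T V k -> (j <= k)%nat -> neg_dim_ge T V j.
Proof.
  intros [v [Hv Hn]] Hjk. exists v. split; [intros; apply Hv; lia|].
  intros c [i [Hi Hci]]. rewrite <- (lincomb_truncate v c j k Hjk). apply Hn.
  exists i. rewrite (proj2 (Nat.ltb_lt i j)) by auto. split; [lia | auto].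
Qed.

(** [n_-] is lower semicontinuous on [A]: projecting a uniformly negative
    [n]-dimensional subspace of [V] to a nearby [V'] keeps it negative for
    every nearby [T']. *)
Theorem negative_index_lsc (T : E -> E) (V : E -> Prop) (n : nat) :
  in_A T V -> n_minus_eq T V n ->
  exists eps, 0 < eps /\
    forall (T' : E -> E) (V' : E -> Prop) (n' : nat), in_A T' V' ->
      opnorm_lt (fun x => hsub (T' x) (T x)) eps -> gdist_lt V' V eps ->
      n_minus_eq T' V' n' -> (n <= n')%nat.
Proof.
  intros HA [[v [Hv Hneg]] _].
  destruct (in_A_split T V HA) as [P [K [alpha HS]]].
  assert (HT := split_T _ _ _ _ _ HS). assert (HTs := split_Tsym _ _ _ _ _ HS).
  assert (HV := closed_subspace_subspace V (split_V _ _ _ _ _ HS)).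
  destruct (negative_definite_uniform T (proj1 HT) HTs n v Hneg) as [beta [Hb Hbeta]].
  destruct (bounded_op_bound T HT) as [M [HM HMb]].
  destruct (small_radius (beta / 2) M) as [eps [He0 [He1 He2]]]; [lra | auto|].
  exists eps. split; auto.
  intros T' V' n' HA' Hop [p1 [p2 [Hp1 [Hp2 Hpd]]]] [_ Hn'].
  assert (HV' := closed_subspace_subspace V' (proj1 (proj2 HA'))).
  destruct (Compare_dec.le_lt_dec n n') as [|Hlt]; auto. exfalso. apply Hn'.
  apply neg_dim_ge_mono with n; [|lia].
  exists (fun i => p1 (v i)). split; [intros; apply (proj_in V' p1 Hp1)|].
  intros c Hc. rewrite <- lincomb_linear by apply (proj_linear V' p1 HV' Hp1).
  set (x := lincomb v c n). assert (Hx : V x) by (apply lincomb_in; auto).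
  assert (Hqx := Hbeta c). assert (Hqn := Hneg c Hc). fold x in Hqx, Hqn.
  assert (Hnx : 0 < nsq x) by (apply nsq_pos; intros Hz; unfold quad in Hqn; rewrite Hz, ip0r in Hqn; lra).
  destruct (quad_perturb T T' M eps x (p1 x) (proj1 HT) HTs HM HMb (opnorm_lt_bound _ _ Hop)
              ltac:(lra) (proj_close V p2 p1 eps x HV Hp2 (opnorm_lt_bound _ _ Hpd) Hx)) as [Hq _].
  assert (Hq' := Rle_abs (quad T' (p1 x) - quad T x)).
  assert ((3 * M + 4) * eps * nsq x <= beta / 2 * nsq x) by (apply Rmult_le_compat_r; lra).
  change (quad T' (p1 x) < 0). nra.
Qed.

(** ** Upper semicontinuity of the negative index plus nullity *)

Lemma strictly_increasing_ge (phi : nat -> nat) :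
  (forall n, (phi n < phi (S n))%nat) -> forall n, (n <= phi n)%nat.
Proof. intros H n. induction n; [lia|]. specialize (H n). lia. Qed.

Lemma quad_lipschitz (T : E -> E) (M : R) (a b : E) :
  is_linear T -> (forall x y, ip (T x) y = ip x (T y)) ->
  (forall z, hnorm (T z) <= M * hnorm z) -> 0 <= M ->
  quad T a <= quad T b + M * hnorm (hsub a b) * (hnorm a + hnorm b).
Proof.
  intros Hl Hs HB HM. unfold quad.
  replace (ip (T a) a) with (ip (T b) b + ip (T (hsub a b)) a + ip (T b) (hsub a b))
    by (rewrite lin_sub by auto; ipsimpl; ring).
  assert (H1 := cauchy_schwarz_upper (T (hsub a b)) a).
  assert (H2 := cauchy_schwarz_upper (T b) (hsub a b)).
  assert (H3 := HB (hsub a b)). assert (H4 := HB b).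
  assert (Ha := hnorm_ge0 a). assert (Hb := hnorm_ge0 b). assert (Hab := hnorm_ge0 (hsub a b)).
  assert (hnorm (T (hsub a b)) * hnorm a <= M * hnorm (hsub a b) * hnorm a)
    by (apply Rmult_le_compat_r; auto).
  assert (hnorm (T b) * hnorm (hsub a b) <= M * hnorm b * hnorm (hsub a b))
    by (apply Rmult_le_compat_r; auto).
  nra.
Qed.

Lemma noncoercive_sequence (T : E -> E) (W : E -> Prop) :
  subspace W -> is_linear T ->
  ~ (exists beta, 0 < beta /\ forall x, W x -> beta * nsq x <= quad T x) ->
  exists x : nat -> E, forall k, W (x k) /\ hnorm (x k) = 1 /\ quad T (x k) < / INR (S k).
Proof.
  intros HW Hl Hnot.
  apply (choice (fun k (x : E) => W x /\ hnorm x = 1 /\ quad T x < / INR (S k))). intro k. apply NNPP. intro Hk. apply Hnot.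
  exists (/ INR (S k)). split; [apply inv_succ_pos|].
  intros x Hx. apply Rnot_lt_le. intro Hlt.
  assert (Hx0 : x <> z0).
  { intros ->. unfold quad, nsq in Hlt. rewrite lin_zero, ip0l in Hlt by auto. lra. }
  assert (Hh := hnorm_pos x Hx0).
  apply Hk. exists (sc (/ hnorm x) x). split; [apply HW; auto|].
  split; [apply hnorm_normalize; auto|].
  rewrite quad_scal by auto. rewrite <- hnorm_sq in Hlt.
  apply Rmult_lt_reg_l with (hnorm x * hnorm x); [nra|].
  replace (hnorm x * hnorm x * (/ hnorm x * / hnorm x * quad T x)) with (quad T x)
    by (field; lra).
  lra.
Qed.

Lemma nonneg_form_null (T : E -> E) (W : E -> Prop) (x : E) :
  subspace W -> is_linear T -> (forall a b, ip (T a) b = ip a (T b)) ->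
  (forall y, W y -> 0 <= quad T y) -> W x -> quad T x = 0 -> forall s, W s -> ip (T x) s = 0.
Proof.
  intros HW Hl Hs Hnn Hx Hq s Hs'.
  assert (H := semidefinite_cauchy_schwarz W T HW Hl (fun a b _ _ => Hs a b) Hnn x s Hx Hs').
  rewrite Hq, Rmult_0_l in H. nra.
Qed.

(** On a subspace [W] of [V] where the form of [T = P + K] is nonnegative,
    a sequence of unit vectors with [<T y m, y m> -> 0] and [K y m]
    convergent is Cauchy: by the parallelogram law [<T(a-b),a-b>] is small,
    and so is its compact part. *)
Lemma minimizing_sequence_cauchy (T : E -> E) (V W : E -> Prop) (P K : E -> E) (alpha : R)
    (y : nat -> E) (l : E) :
  ess_pos_split T V P K alpha -> subspace W -> (forall x, W x -> V x) ->
  (forall x, W x -> 0 <= quad T x) ->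
  (forall m, W (y m) /\ hnorm (y m) = 1 /\ quad T (y m) < / INR (S m)) ->
  converges (fun m => K (y m)) l ->
  forall eps, 0 < eps -> exists N, forall m k, (N <= m)%nat -> (N <= k)%nat ->
    hnorm (hsub (y m) (y k)) < eps.
Proof.
  intros HS HW HWV Hnn Hy Hl eps Heps.
  assert (Ha := split_alpha _ _ _ _ _ HS). assert (HTl := proj1 (split_T _ _ _ _ _ HS)).
  set (r := alpha * (eps * eps) / 16).
  assert (Hr : 0 < r) by (unfold r; assert (0 < eps * eps) by nra;
                          apply Rdiv_lt_0_compat; [apply Rmult_lt_0_compat |]; lra).
  destruct (Hl r Hr) as [N1 HN1]. destruct (inv_succ_below r Hr) as [N2 HN2].
  exists (max N1 N2). intros m k Hm Hk.
  destruct (Hy m) as [Wm [Nm Qm]]. destruct (Hy k) as [Wk [Nk Qk]].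
  assert (Qm' : quad T (y m) < r)
    by (eapply Rlt_le_trans; [apply Qm | eapply Rle_trans; [apply inv_succ_antitone with (N := N2); lia | lra]]).
  assert (Qk' : quad T (y k) < r)
    by (eapply Rlt_le_trans; [apply Qk | eapply Rle_trans; [apply inv_succ_antitone with (N := N2); lia | lra]]).
  assert (Km := HN1 m ltac:(lia)). assert (Kk := HN1 k ltac:(lia)). cbv beta in Km, Kk.
  set (a := y m) in *. set (b := y k) in *.
  assert (Hab : W (hsub a b)) by (apply subspace_sub; auto).
  assert (Hpar : quad T (hsub a b) + quad T (add a b) = 2 * quad T a + 2 * quad T b)
    by (unfold quad; rewrite lin_sub, lin_add by auto; ipsimpl; ring).
  assert (Hsum := Hnn (add a b) ltac:(apply HW; auto)).
  assert (Hco := split_coercive _ _ _ _ _ HS (hsub a b) (HWV _ Hab)).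
  assert (Hdec := split_sum _ _ _ _ _ HS (hsub a b) (hsub a b) (HWV _ Hab) (HWV _ Hab)).
  assert (HK := cauchy_schwarz_lower (K (hsub a b)) (hsub a b)).
  assert (HKl : hnorm (K (hsub a b)) < 2 * r).
  { rewrite lin_sub by apply (split_K _ _ _ _ _ HS).
    eapply Rle_lt_trans; [apply hnorm_triangle_sub with (y := l)|].
    rewrite (hnorm_sub_sym l). lra. }
  assert (Hn2 : hnorm (hsub a b) <= 2) by (eapply Rle_trans; [apply hnorm_sub_le | lra]).
  assert (HKb : - (2 * r * 2) <= ip (K (hsub a b)) (hsub a b)).
  { eapply Rle_trans; [|apply HK]. apply Ropp_le_contravar.
    apply Rmult_le_compat; try apply hnorm_ge0; lra. }
  assert (Hsmall : alpha * nsq (hsub a b) < alpha * (eps * eps / 2)) by (unfold quad, r in *; lra).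
  apply Rmult_lt_reg_l in Hsmall; auto. rewrite <- hnorm_sq in Hsmall.
  assert (H0 := hnorm_ge0 (hsub a b)).
  apply Rnot_le_lt. intro Hc. nra.
Qed.

Section Complement.
Variables (T : E -> E) (V : E -> Prop) (P K : E -> E) (alpha : R) (n d : nat) (w z : nat -> E).
Hypothesis HS : ess_pos_split T V P K alpha.
Hypothesis Hw : forall i, (i < n)%nat -> V (w i).
Hypothesis Hwneg : forall c, (exists i, (i < n)%nat /\ c i <> 0) -> quad T (lincomb w c n) < 0.
Hypothesis Hnn : ~ neg_dim_ge T V (S n).
Hypothesis Hz : forall i, (i < d)%nat -> in_ker T V (z i).
Hypothesis Hzind : forall c, lincomb z c d = z0 -> forall i, (i < d)%nat -> c i = 0.
Hypothesis Hkn : ~ ker_dim_ge T V (S d).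

Let HTl : is_linear T := proj1 (split_T _ _ _ _ _ HS).
Let HTs := split_Tsym _ _ _ _ _ HS.
Let HV : subspace V := closed_subspace_subspace V (split_V _ _ _ _ _ HS).

Definition constraint : nat -> E := concat_family (fun i => T (w i)) z n.

(** The complement: vectors of [V] that are [B]-orthogonal to the negative
    family and orthogonal to the kernel. *)
Definition complement (x : E) : Prop :=
  V x /\ forall i, (i < n + d)%nat -> ip x (constraint i) = 0.

Lemma complement_neg (x : E) : complement x -> forall i, (i < n)%nat -> ip x (T (w i)) = 0.
Proof.
  intros [_ H] i Hi. assert (H1 := H i ltac:(lia)).
  unfold constraint, concat_family in H1. rewrite (proj2 (Nat.ltb_lt i n)) in H1; auto.
Qed.

Lemma complement_ker (x : E) : complement x -> forall j, (j < d)%nat -> ip x (z j) = 0.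
Proof.
  intros [_ H] j Hj. assert (H1 := H (n + j)%nat ltac:(lia)).
  unfold constraint, concat_family in H1. rewrite (proj2 (Nat.ltb_ge (n + j) n)) in H1 by lia.
  replace (n + j - n)%nat with j in H1 by lia. auto.
Qed.

Lemma complement_subspace : subspace complement.
Proof.
  destruct HV as [H0 [Ha Hs]]. split; [|split].
  - split; auto. intros; apply ip0l.
  - intros x y [Hx Hx'] [Hy Hy']. split; auto. intros. rewrite ip_addl, Hx', Hy'; auto. ring.
  - intros a x [Hx Hx']. split; auto. intros. rewrite ip_scl, Hx'; auto. ring.
Qed.

Lemma complement_closed (u : nat -> E) (l : E) :
  (forall m, complement (u m)) -> converges u l -> complement l.
Proof.
  intros Hu Hl. split.
  - apply (split_V _ _ _ _ _ HS) with u; auto. intro m; apply Hu.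
  - intros i Hi. apply (limit_orthogonal u); auto. intro m. apply (proj2 (Hu m)); auto.
Qed.

Lemma ker_orth (j : nat) (y : E) : (j < d)%nat -> V y -> ip (T y) (z j) = 0.
Proof. intros Hj Hy. rewrite HTs, hinner_sym. apply (Hz j Hj). auto. Qed.

(** Maximality of [w]: the form is nonnegative on the complement, since a
    negative vector there would extend [w] to an [n+1]-dimensional negative
    definite family. *)
Lemma complement_nonneg (x : E) : complement x -> 0 <= quad T x.
Proof.
  intros Hx. apply Rnot_lt_le. intro Hq. apply Hnn.
  exists (fun i => if Nat.ltb i n then w i else x). split.
  { intros i Hi. destruct (Nat.ltb_spec i n); [auto | apply Hx]. }
  intros c Hc. simpl. rewrite Nat.ltb_irrefl.
  rewrite (lincomb_ext _ w c c n) by (intros i Hi; rewrite ?(proj2 (Nat.ltb_lt i n)); auto).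
  set (a := lincomb w c n).
  assert (Hax : ip (T a) x = 0).
  { unfold a. rewrite lincomb_linear, lincomb_ip by auto. apply rsum_zero. intros i Hi.
    rewrite hinner_sym, (complement_neg x Hx i Hi). ring. }
  change (quad T (add a (sc (c n) x)) < 0). rewrite (quad_add_orth T a x HTl HTs Hax).
  destruct (classic (exists i, (i < n)%nat /\ c i <> 0)) as [Hc' | Hc'].
  - assert (H1 := Hwneg c Hc'). assert (0 <= c n * c n) by nra. fold a in H1. nra.
  - assert (Ha0 : a = z0).
    { apply lincomb_zero_coef. intros i Hi. apply NNPP. intro. apply Hc'. exists i; auto. }
    assert (c n <> 0).
    { destruct Hc as [i [Hi Hci]]. destruct (Nat.eq_dec i n) as [->|]; auto.
      exfalso. apply Hc'. exists i. split; auto. lia. }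
    unfold quad at 1. rewrite Ha0, lin_zero, ip0l by auto. assert (0 < c n * c n) by nra. nra.
Qed.

Lemma complement_meets_span (a b : nat -> R) :
  complement (add (lincomb w a n) (lincomb z b d)) ->
  (forall i, (i < n)%nat -> a i = 0) /\ (forall j, (j < d)%nat -> b j = 0).
Proof.
  intros Hc. set (x := lincomb w a n) in *. set (y := lincomb z b d) in *.
  assert (HyT : ip y (T x) = 0).
  { rewrite <- HTs. unfold y. rewrite lincomb_linear, lincomb_ip by auto.
    apply rsum_zero. intros j Hj. rewrite (proj2 (Hz j Hj)); [ring | apply lincomb_in; auto]. }
  assert (Hqx : quad T x = 0).
  { unfold quad. rewrite hinner_sym, <- HTs.
    assert (H : ip (add x y) (T x) = 0).
    { unfold x at 2. rewrite lincomb_linear, ip_lincomb by auto. apply rsum_zero. intros i Hi.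
      rewrite (complement_neg _ Hc i Hi). ring. }
    rewrite ip_addl, HyT in H. rewrite HTs. lra. }
  assert (Ha : forall i, (i < n)%nat -> a i = 0).
  { intros i Hi. apply NNPP. intro Hai. assert (H1 := Hwneg a (ex_intro _ i (conj Hi Hai))).
    fold x in H1. lra. }
  split; auto.
  assert (Hx0 : x = z0) by (apply lincomb_zero_coef; auto).
  rewrite Hx0 in Hc. replace (add z0 y) with y in Hc by vecsolve.
  apply Hzind, nsq_eq0. fold y. unfold nsq. unfold y at 2. rewrite ip_lincomb.
  apply rsum_zero. intros j Hj. rewrite (complement_ker _ Hc j Hj). ring.
Qed.

(** [V = complement + span w + span z]: adjoin [v0] to the [n + d] vectors
    [w, z]; some nontrivial combination satisfies the [n + d] constraints,
    and by [complement_meets_span] its [v0]-coefficient is nonzero. *)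
Lemma complement_decompose (v0 : E) : V v0 ->
  exists s a b, complement s /\ v0 = add s (add (lincomb w a n) (lincomb z b d)).
Proof.
  intro Hv0. set (u := concat_family (concat_family w z n) (fun _ => v0) (n + d)).
  destruct (orthogonal_combination (S (n + d)) (map constraint (seq 0 (n + d))) u)
    as [c [Hc Horth]]; [rewrite length_map, length_seq; lia|].
  assert (Hsplit : lincomb u c (S (n + d)) =
                   add (add (lincomb w c n) (lincomb z (fun j => c (n + j)%nat) d))
                       (sc (c (n + d)%nat) v0)).
  { simpl. replace (u (n + d)%nat) with v0 by (unfold u, concat_family; rewrite Nat.ltb_irrefl; auto).
    rewrite (lincomb_ext u (concat_family w z n) c c (n + d)), lincomb_concat; auto.
    intros i Hi. unfold u, concat_family at 1. rewrite (proj2 (Nat.ltb_lt i (n + d))); auto. }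
  assert (Hcomp : complement (lincomb u c (S (n + d)))).
  { split.
    - apply lincomb_in; auto. intros i Hi. unfold u, concat_family.
      destruct (Nat.ltb_spec i (n + d)); destruct (Nat.ltb_spec i n); auto; apply Hz; lia.
    - intros i Hi. apply Horth, in_map_iff. exists i. split; auto. apply in_seq. lia. }
  assert (Hcn : c (n + d)%nat <> 0).
  { intro Hcn. rewrite Hsplit, Hcn in Hcomp.
    replace (add (add (lincomb w c n) (lincomb z (fun j => c (n + j)%nat) d)) (sc 0 v0))
      with (add (lincomb w c n) (lincomb z (fun j => c (n + j)%nat) d)) in Hcomp by vecsolve.
    destruct (complement_meets_span _ _ Hcomp) as [Ha Hb].
    destruct Hc as [i [Hi Hci]]. apply Hci.
    destruct (Nat.ltb_spec i n); [auto|].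
    destruct (Nat.eq_dec i (n + d)) as [->|]; auto.
    replace i with (n + (i - n))%nat by lia. apply Hb. lia. }
  exists (sc (/ c (n + d)%nat) (lincomb u c (S (n + d)))).
  exists (fun i => - / c (n + d)%nat * c i), (fun j => - / c (n + d)%nat * c (n + j)%nat).
  split; [apply complement_subspace; auto|].
  rewrite !lincomb_scal, Hsplit. apply vec_ext; intro y. ipsimpl. field. auto.
Qed.

(** The form is nondegenerate on the complement: a vector [B]-orthogonal to
    the complement is [B]-orthogonal to all of [V], hence in the kernel, and
    being orthogonal to the kernel basis it must vanish. *)
Lemma complement_nondegenerate (x : E) :
  complement x -> (forall s, complement s -> ip (T x) s = 0) -> x = z0.
Proof.
  intros Hx Hk.
  assert (Hall : forall v0, V v0 -> ip (T x) v0 = 0).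
  { intros v0 Hv0. destruct (complement_decompose v0 Hv0) as [s [a [b [Hs ->]]]].
    ipsimpl. rewrite Hk, !ip_lincomb by auto.
    rewrite (rsum_zero _ n), (rsum_zero _ d); [ring | |].
    - intros j Hj. rewrite ker_orth; [ring | auto | apply Hx].
    - intros i Hi. rewrite HTs, (complement_neg x Hx i Hi). ring. }
  apply NNPP. intro Hx0. apply Hkn.
  exists (fun i => if Nat.ltb i d then z i else x). split.
  - intros i Hi. destruct (Nat.ltb_spec i d); [apply Hz; auto | split; [apply Hx | auto]].
  - intros c Hc. simpl in Hc. rewrite Nat.ltb_irrefl in Hc.
    rewrite (lincomb_ext _ z c c d) in Hc by (intros i Hi; rewrite ?(proj2 (Nat.ltb_lt i d)); auto).
    assert (H1 := f_equal (fun y => ip y x) Hc). simpl in H1. ipsimpl_in H1.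
    rewrite lincomb_ip, rsum_zero in H1 by (intros j Hj; rewrite hinner_sym, (complement_ker x Hx j Hj); ring).
    assert (Hnx := nsq_pos x Hx0). unfold nsq in Hnx.
    assert (Hcd : c d = 0) by nra.
    rewrite Hcd in Hc. replace (add (lincomb z c d) (sc 0 x)) with (lincomb z c d) in Hc by vecsolve.
    intros i Hi. destruct (Nat.eq_dec i d) as [->|]; auto. apply Hzind; auto. lia.
Qed.

(** Otherwise take unit vectors
    [x k] there with [<T x k, x k> -> 0]; by compactness of [K] and
    [minimizing_sequence_cauchy] a subsequence converges to a unit vector
    [xi] of the complement with [<T xi, xi> = 0], which by [nonneg_form_null]
    and [complement_nondegenerate] must vanish. *)
Lemma complement_coercive :
  exists beta, 0 < beta /\ forall x, complement x -> beta * nsq x <= quad T x.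
Proof.
  apply NNPP. intro Hnot.
  destruct (noncoercive_sequence T complement complement_subspace HTl Hnot) as [xs Hxs].
  destruct (split_Kcompact _ _ _ _ _ HS xs) as [phi [Hphi [l Hl]]];
    [intro k; apply Hxs | exists 1; intro k; right; apply Hxs|].
  set (y := fun m => xs (phi m)).
  assert (Hy : forall m, complement (y m) /\ hnorm (y m) = 1 /\ quad T (y m) < / INR (S m)).
  { intro m. destruct (Hxs (phi m)) as [H1 [H2 H3]]. split; [exact H1 | split; [exact H2|]].
    eapply Rlt_le_trans; [apply H3|].
    apply inv_succ_antitone, strictly_increasing_ge; auto. }
  destruct (hcomplete E y) as [xi Hxi].
  { apply (minimizing_sequence_cauchy T V complement P K alpha y l HS complement_subspace);
      auto; [intros x Hx; apply Hx | apply complement_nonneg]. }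
  change (converges y xi) in Hxi.
  assert (Hxi_in : complement xi) by (apply (complement_closed y); auto; intro m; apply Hy).
  destruct (bounded_op_bound T (split_T _ _ _ _ _ HS)) as [M [HM HMb]].
  assert (Hq0 : quad T xi <= 0).
  { apply Rnot_lt_le. intro Hpos.
    destruct (small_radius (quad T xi / 2) M) as [dl [Hdl0 [Hdl1 Hdl2]]]; [lra | auto|].
    destruct (Hxi dl Hdl0) as [N1 HN1]. destruct (inv_succ_below (quad T xi / 2)) as [N2 HN2]; [lra|].
    set (m := max N1 N2). specialize (HN1 m ltac:(lia)). destruct (Hy m) as [_ [Hn1 Hqm]].
    assert (Hqm' : quad T (y m) < quad T xi / 2).
    { eapply Rlt_le_trans; [apply Hqm|].
      eapply Rle_trans; [apply inv_succ_antitone with (N := N2); lia | lra]. }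
    assert (Hc := quad_lipschitz T M xi (y m) HTl HTs HMb HM). rewrite hnorm_sub_sym in Hc.
    assert (Hxn : hnorm xi <= 2).
    { assert (H1 := hnorm_reverse xi (y m)). rewrite hnorm_sub_sym in H1. lra. }
    assert (M * hnorm (hsub (y m) xi) * (hnorm xi + hnorm (y m)) <= M * dl * 3).
    { apply Rmult_le_compat; [apply Rmult_le_pos; auto; apply hnorm_ge0 | | |];
        [generalize (hnorm_ge0 xi); lra | apply Rmult_le_compat_l; lra | lra]. }
    nra. }
  assert (Hqe : quad T xi = 0) by (generalize (complement_nonneg _ Hxi_in); lra).
  assert (Hxi0 : xi <> z0).
  { intros Hz0. destruct (Hxi (1 / 2)) as [N HN]; [lra|]. specialize (HN N (le_n _)).
    rewrite Hz0 in HN. replace (hsub (y N) z0) with (y N) in HN by vecsolve.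
    destruct (Hy N) as [_ [H1 _]]. lra. }
  apply Hxi0, complement_nondegenerate; auto.
  apply (nonneg_form_null T complement xi complement_subspace HTl HTs complement_nonneg Hxi_in Hqe).
Qed.

End Complement.

Lemma nonpositive_vector_off_constraints (T' : E -> E) (V' : E -> Prop) (n' d' : nat)
    (w' z' : nat -> E) (ys : list E) :
  is_linear T' -> (forall a b, ip (T' a) b = ip a (T' b)) -> subspace V' ->
  (forall i, (i < n')%nat -> V' (w' i)) ->
  (forall c, (exists i, (i < n')%nat /\ c i <> 0) -> quad T' (lincomb w' c n') < 0) ->
  (forall i, (i < d')%nat -> in_ker T' V' (z' i)) ->
  (forall c, lincomb z' c d' = z0 -> forall i, (i < d')%nat -> c i = 0) ->
  (length ys < n' + d')%nat ->
  exists y, V' y /\ y <> z0 /\ quad T' y <= 0 /\ orth_to ys y.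
Proof.
  intros HT' HTs' HV' Hw' Hwneg' Hz' Hzind' Hlen.
  destruct (orthogonal_combination (n' + d') ys (concat_family w' z' n')) as [c [Hc Horth]]; auto.
  set (y := lincomb (concat_family w' z' n') c (n' + d')) in *.
  set (a := lincomb w' c n'). set (b := lincomb z' (fun j => c (n' + j)%nat) d').
  assert (Hyab : y = add a b) by apply lincomb_concat.
  assert (HaV : V' a) by (apply lincomb_in; auto).
  assert (Hbk : in_ker T' V' b) by (apply ker_lincomb; auto).
  exists y. split; [rewrite Hyab; apply HV'; auto; apply Hbk|].
  assert (Hqy : quad T' y = quad T' a).
  { unfold quad. rewrite Hyab, (lin_add T') by auto. ipsimpl.
    assert (E1 : ip (T' b) a = 0) by (apply (proj2 Hbk); auto).
    assert (E2 : ip (T' b) b = 0) by (apply (proj2 Hbk); apply Hbk).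
    assert (E3 : ip (T' a) b = 0) by (rewrite HTs', hinner_sym; auto).
    rewrite E1, E2, E3. ring. }
  destruct (classic (exists i, (i < n')%nat /\ c i <> 0)) as [Hci | Hci].
  - assert (H1 := Hwneg' c Hci). fold a in H1.
    split; [intro Hz0; unfold quad in *; rewrite Hz0, ip0r in Hqy | split]; auto; lra.
  - assert (Ha0 : a = z0).
    { apply lincomb_zero_coef. intros i Hi. apply NNPP; intro; apply Hci; exists i; auto. }
    split; [|split; auto].
    + intro Hy. rewrite Hyab, Ha0 in Hy. replace (add z0 b) with b in Hy by vecsolve.
      destruct Hc as [i [Hi Hci']]. destruct (Compare_dec.le_lt_dec n' i).
      * apply Hci'. replace i with (n' + (i - n'))%nat by lia. apply (Hzind' _ Hy). lia.
      * apply Hci. exists i; auto.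
    + rewrite Hqy. unfold quad. rewrite Ha0, lin_zero, ip0r by auto. lra.
Qed.

(** [n_- + dim Ker] is upper semicontinuous on [A]: for [(T', V')] close to
    [(T, V)], an [(n' + d')]-dimensional subspace of [V'] on which the form of
    [T'] is nonpositive, with [n' + d' > n + d], would contain a nonzero
    vector whose projection to [V] lies in the complement, where the form of
    [T] is coercive; the perturbation estimate makes [<T' y, y>] positive. *)
Theorem index_nullity_usc (T : E -> E) (V : E -> Prop) (n d : nat) :
  in_A T V -> n_minus_eq T V n -> ker_dim_eq T V d ->
  exists eps, 0 < eps /\
    forall (T' : E -> E) (V' : E -> Prop) (n' d' : nat), in_A T' V' ->
      opnorm_lt (fun x => hsub (T' x) (T x)) eps -> gdist_lt V' V eps ->
      n_minus_eq T' V' n' -> ker_dim_eq T' V' d' -> (n' + d' <= n + d)%nat.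
Proof.
  intros HA [[w [Hw Hwneg]] Hnn] [[z [Hz Hzind]] Hkn].
  destruct (in_A_split T V HA) as [P [K [alpha HS]]].
  assert (HT := split_T _ _ _ _ _ HS). assert (HTs := split_Tsym _ _ _ _ _ HS).
  assert (HV := closed_subspace_subspace V (split_V _ _ _ _ _ HS)).
  destruct (complement_coercive T V P K alpha n d w z HS Hw Hwneg Hnn Hz Hzind Hkn)
    as [beta [Hb Hbeta]].
  destruct (bounded_op_bound T HT) as [M [HM HMb]].
  destruct (small_radius (beta / 8) M) as [eps [He0 [He1 He2]]]; [lra | auto|].
  exists eps. split; auto.
  intros T' V' n' d' HA' Hop [p1 [p2 [Hp1 [Hp2 Hpd]]]] [[w' [Hw' Hwneg']] _] [[z' [Hz' Hzind']] _].
  assert (HV' := closed_subspace_subspace V' (proj1 (proj2 HA'))).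
  destruct (Compare_dec.le_lt_dec (n' + d') (n + d)) as [|Hlt]; auto. exfalso.
  destruct (nonpositive_vector_off_constraints T' V' n' d' w' z'
              (map (fun i => p2 (constraint T n w z i)) (seq 0 (n + d))))
    as [y [HyV [Hy0 [Hqy0 Horth]]]];
    [apply HA' | apply HA' | auto | auto | auto | auto | auto | rewrite length_map, length_seq; auto|].
  set (x := p2 y).
  assert (Hxc : complement T V n d w z x).
  { split; [apply (proj_in V p2 Hp2)|]. intros i Hi. unfold x. rewrite (proj_symmetric V p2 Hp2).
    apply Horth, in_map_iff. exists i. split; auto. apply in_seq. lia. }
  assert (Hd : hnorm (hsub x y) <= eps * hnorm y).
  { apply (proj_close V' p1 p2 eps y HV' Hp1); auto.
    intro u. rewrite hnorm_sub_sym. apply (opnorm_lt_bound _ _ Hpd). }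
  destruct (quad_perturb T T' M eps y x (proj1 HT) HTs HM HMb (opnorm_lt_bound _ _ Hop)
              ltac:(lra) Hd) as [_ Hq].
  assert (Hq' := Rle_abs (- (quad T' y - quad T x))). rewrite Rabs_Ropp in Hq'.
  assert (Hx := Hbeta x Hxc).
  assert (Hxy := proj1 (nsq_close y x eps ltac:(lra) Hd)).
  assert (Hny := nsq_pos y Hy0).
  assert ((3 * M + 4) * eps * nsq y <= beta / 8 * nsq y) by (apply Rmult_le_compat_r; lra).
  nra.
Qed.

(** ** Openness of [A] *)

Section FixedPoint.
Variables (W : E -> Prop) (Phi : E -> E) (r : R).
Hypothesis HW : closed_subspace W.
Hypothesis HPhiW : forall x, W x -> W (Phi x).
Hypothesis Hr : 0 <= r < 1.
Hypothesis Hlip : forall a b, W a -> W b -> hnorm (hsub (Phi a) (Phi b)) <= r * hnorm (hsub a b).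

Fixpoint iterate (k : nat) : E := match k with O => z0 | S k' => Phi (iterate k') end.

Lemma iterate_in (k : nat) : W (iterate k).
Proof. induction k; simpl; [apply HW | apply HPhiW; auto]. Qed.

Let D := hnorm (hsub (iterate 1) (iterate 0)).

Lemma iterate_step (k : nat) : hnorm (hsub (iterate (S k)) (iterate k)) <= r ^ k * D.
Proof.
  induction k; [unfold D; simpl; lra|].
  change (hnorm (hsub (Phi (iterate (S k))) (Phi (iterate k))) <= r ^ S k * D).
  eapply Rle_trans; [apply Hlip; apply iterate_in|]. simpl.
  rewrite Rmult_assoc. apply Rmult_le_compat_l; [lra | exact IHk].
Qed.

Lemma iterate_tail (N j : nat) : hnorm (hsub (iterate (N + j)) (iterate N)) <= D * r ^ N / (1 - r).
Proof.
  assert (HD : 0 <= D) by apply hnorm_ge0.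
  assert (Hspan : hnorm (hsub (iterate (N + j)) (iterate N)) <= D * (r ^ N - r ^ (N + j)) / (1 - r)).
  { induction j.
    - rewrite Nat.add_0_r. replace (hsub (iterate N) (iterate N)) with z0 by vecsolve.
      rewrite hnorm0. right. field. lra.
    - rewrite Nat.add_succ_r. eapply Rle_trans; [apply hnorm_triangle_sub with (y := iterate (N + j))|].
      assert (H1 := iterate_step (N + j)).
      apply Rle_trans with (r ^ (N + j) * D + D * (r ^ N - r ^ (N + j)) / (1 - r)); [lra|].
      right. simpl. field. lra. }
  eapply Rle_trans; [apply Hspan|]. unfold Rdiv.
  apply Rmult_le_compat_r; [apply Rlt_le, Rinv_0_lt_compat; lra|].
  assert (0 <= r ^ (N + j)) by (apply pow_le; lra). nra.
Qed.

Lemma iterate_cauchy (eps : R) : 0 < eps -> exists N, forall m k, (N <= m)%nat -> (N <= k)%nat ->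
  hnorm (hsub (iterate m) (iterate k)) < eps.
Proof.
  intros Heps. assert (HD : 0 <= D) by apply hnorm_ge0.
  destruct (pow_lt_1_zero r ltac:(rewrite Rabs_right; lra) (eps * (1 - r) / (2 * (D + 1))))
    as [N HN]; [apply Rdiv_lt_0_compat; nra|].
  exists N. intros m k Hm Hk. specialize (HN N (le_n _)).
  rewrite Rabs_right in HN by (apply Rle_ge, pow_le; lra).
  eapply Rle_lt_trans; [apply hnorm_triangle_sub with (y := iterate N)|].
  rewrite (hnorm_sub_sym (iterate N)).
  replace m with (N + (m - N))%nat by lia. replace k with (N + (k - N))%nat by lia.
  assert (H1 := iterate_tail N (m - N)). assert (H2 := iterate_tail N (k - N)).
  assert (D * r ^ N / (1 - r) < eps / 2); [|lra].
  apply Rmult_lt_reg_r with (1 - r); [lra|]. unfold Rdiv. rewrite Rmult_assoc, Rinv_l by lra.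
  assert (0 <= r ^ N) by (apply pow_le; lra).
  assert (r ^ N * (2 * (D + 1)) < eps * (1 - r)).
  { apply Rmult_lt_reg_r with (/ (2 * (D + 1))); [apply Rinv_0_lt_compat; lra|].
    rewrite Rmult_assoc, Rinv_r by lra. lra. }
  nra.
Qed.

Lemma contraction_fixed_point : exists x, W x /\ Phi x = x.
Proof.
  destruct (hcomplete E iterate iterate_cauchy) as [x Hx]. change (converges iterate x) in Hx.
  assert (HxW : W x) by (apply HW with iterate; auto; apply iterate_in).
  exists x. split; auto.
  assert (Hfix : hnorm (hsub (Phi x) x) = 0).
  { apply Rle_antisym; [|apply hnorm_ge0]. apply Rnot_lt_le. intro Hpos.
    set (e := hnorm (hsub (Phi x) x)) in *.
    destruct (Hx (e / 2)) as [N HN]; [lra|].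
    assert (H1 := HN N (le_n _)). assert (H2 := HN (S N) (le_S _ _ (le_n _))).
    assert (H3 := hnorm_triangle_sub (Phi x) (iterate (S N)) x).
    assert (H4 := Hlip x (iterate N) HxW (iterate_in N)).
    change (Phi (iterate N)) with (iterate (S N)) in H4.
    rewrite (hnorm_sub_sym x) in H4. fold e in H3.
    assert (H5 := hnorm_ge0 (hsub (iterate N) x)). nra. }
  apply hnorm_eq0 in Hfix. apply vec_ext; intro v.
  assert (H1 := f_equal (fun u => ip u v) Hfix). simpl in H1. ipsimpl_in H1. lra.
Qed.

End FixedPoint.

Lemma coercive_damped_contraction (W : E -> Prop) (A : E -> E) (beta M : R) (a : E) :
  0 < beta <= M -> (forall x, hnorm (A x) <= M * hnorm x) ->
  (forall x, W x -> beta * nsq x <= quad A x) -> W a ->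
  hnorm (hsub a (sc (beta / (M * M)) (A a))) <= sqrt (1 - beta * beta / (M * M)) * hnorm a.
Proof.
  intros [Hb HM] HAM Hco Ha.
  assert (Hq : beta * beta / (M * M) <= 1).
  { apply Rmult_le_reg_r with (M * M); [nra|].
    unfold Rdiv. rewrite Rmult_assoc, Rinv_l by nra. nra. }
  unfold hnorm. rewrite <- sqrt_mult_alt by lra. apply sqrt_le_1_alt.
  ipsimpl. rewrite (hinner_sym E a (A a)).
  assert (H1 := Hco a Ha). assert (H2 := HAM a).
  assert (H3 : nsq (A a) <= M * M * nsq a).
  { rewrite <- !hnorm_sq. assert (H0 := hnorm_ge0 (A a)). nra. }
  unfold nsq, quad in *. set (t := beta / (M * M)).
  assert (Ht : 0 <= t) by (apply Rlt_le, Rdiv_lt_0_compat; nra).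
  assert (H4 : t * t * ip (A a) (A a) <= t * t * (M * M * ip a a)) by (apply Rmult_le_compat_l; nra).
  assert (H5 : t * t * (M * M * ip a a) = beta * beta / (M * M) * ip a a) by (unfold t; field; nra).
  assert (H6 : t * (beta * ip a a) <= t * ip (A a) a) by (apply Rmult_le_compat_l; nra).
  assert (H7 : t * (beta * ip a a) = beta * beta / (M * M) * ip a a) by (unfold t; field; nra).
  nra.
Qed.

(** Coercive operators are onto on [W]: [A x = y] is solved by the fixed
    point of the contraction [x |-> x - t (A x - y)]. *)
Lemma coercive_surjective (W : E -> Prop) (A : E -> E) (beta : R) :
  closed_subspace W -> bounded_op A -> (forall x, W x -> W (A x)) ->
  0 < beta -> (forall x, W x -> beta * nsq x <= quad A x) ->
  forall y, W y -> exists x, W x /\ A x = y.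
Proof.
  intros HW HA HAW Hb Hco y Hy.
  assert (HWs := closed_subspace_subspace W HW). assert (HAl := proj1 HA).
  destruct (bounded_op_bound A HA) as [M0 [HM0 HAM]].
  set (M := M0 + beta). set (t := beta / (M * M)).
  assert (HAM' : forall x, hnorm (A x) <= M * hnorm x).
  { intro x. specialize (HAM x). assert (H := hnorm_ge0 x). unfold M. nra. }
  assert (Hq : 0 < beta * beta / (M * M) <= 1).
  { unfold M. split; [apply Rdiv_lt_0_compat; nra|].
    apply Rmult_le_reg_r with ((M0 + beta) * (M0 + beta)); [nra|].
    unfold Rdiv. rewrite Rmult_assoc, Rinv_l by nra. nra. }
  destruct (contraction_fixed_point W (fun x => hsub x (sc t (hsub (A x) y)))
              (sqrt (1 - beta * beta / (M * M))) HW) as [x [HxW Hx]].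
  - intros x Hx. apply subspace_sub; auto. apply HWs, subspace_sub; auto.
  - assert (Hs : sqrt (1 - beta * beta / (M * M)) < sqrt 1) by (apply sqrt_lt_1_alt; lra).
    rewrite sqrt_1 in Hs. split; [apply sqrt_pos | exact Hs].
  - intros a b Ha Hb'.
    replace (hsub (hsub a (sc t (hsub (A a) y))) (hsub b (sc t (hsub (A b) y))))
      with (hsub (hsub a b) (sc t (A (hsub a b)))) by (rewrite lin_sub by auto; vecsolve).
    apply (coercive_damped_contraction W); auto; [unfold M; lra | apply subspace_sub; auto].
  - exists x. split; auto. apply vec_ext; intro u.
    assert (H1 := f_equal (fun z => ip z u) Hx). simpl in H1. ipsimpl_in H1.
    assert (Ht : 0 < t) by (apply Rdiv_lt_0_compat; unfold M; nra).
    assert (Hz : t * (ip (A x) u - ip y u) = 0) by lra.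
    apply Rmult_integral in Hz. destruct Hz; lra.
Qed.

Lemma coercive_injective (W : E -> Prop) (A : E -> E) (beta : R) :
  subspace W -> is_linear A -> 0 < beta -> (forall x, W x -> beta * nsq x <= quad A x) ->
  forall a b, W a -> W b -> A a = A b -> a = b.
Proof.
  intros HW HAl Hb Hco a b Ha Hb' Hab. assert (Hd : W (hsub a b)) by (apply subspace_sub; auto).
  assert (H := Hco _ Hd). unfold quad in H. rewrite lin_sub, Hab in H by auto.
  replace (hsub (A b) (A b)) with z0 in H by vecsolve. rewrite ip0l in H.
  assert (Hz : nsq (hsub a b) = 0) by (generalize (nsq_ge0 (hsub a b)); nra).
  apply nsq_eq0 in Hz. apply vec_ext; intro v. assert (H1 := f_equal (fun u => ip u v) Hz).
  simpl in H1. ipsimpl_in H1. lra.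
Qed.

(** Lax-Milgram: a bounded operator that maps the closed subspace [W] into
    itself and is coercive there is invertible on [W]; the inverse, extended
    by [Q = A|_W^-1 o P_W], is bounded by [1/beta]. *)
Lemma lax_milgram (W : E -> Prop) (pw A : E -> E) (beta : R) :
  closed_subspace W -> is_orth_proj W pw -> bounded_op A -> (forall x, W x -> W (A x)) ->
  0 < beta -> (forall x, W x -> beta * nsq x <= quad A x) ->
  exists Q, bounded_op Q /\ (forall x, W x -> W (Q x)) /\
            (forall x, W x -> A (Q x) = x /\ Q (A x) = x).
Proof.
  intros HW Hpw HA HAW Hb Hco.
  assert (HWs := closed_subspace_subspace W HW). assert (HAl := proj1 HA).
  assert (Hsolve : forall v, exists x, W x /\ A x = pw v)
    by (intro v; apply (coercive_surjective W A beta); auto; apply (proj_in W pw Hpw)).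
  apply choice in Hsolve. destruct Hsolve as [Q HQ].
  assert (Huniq := coercive_injective W A beta HWs HAl Hb Hco).
  assert (Hpl := proj_linear W pw HWs Hpw).
  exists Q. split; [split; [split|] | split].
  - intros a b. apply Huniq; [apply HQ | apply HWs; apply HQ|].
    rewrite (lin_add A), !(proj2 (HQ _)), (lin_add pw); auto.
  - intros c a. apply Huniq; [apply HQ | apply HWs; apply HQ|].
    rewrite (lin_scal A), !(proj2 (HQ _)), (lin_scal pw); auto.
  - exists (/ beta). intro v. destruct (HQ v) as [HQW HQA].
    assert (H1 := Hco _ HQW). unfold quad in H1. rewrite HQA in H1.
    assert (H2 := cauchy_schwarz_upper (pw v) (Q v)). assert (H3 := proj_norm W pw Hpw v).
    rewrite <- hnorm_sq in H1. assert (H4 := hnorm_ge0 (Q v)). assert (H5 := hnorm_ge0 (pw v)).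
    assert (H6 : beta * hnorm (Q v) <= hnorm v).
    { destruct (Rle_lt_or_eq_dec _ _ H4) as [Hlt | <-]; [|generalize (hnorm_ge0 v); lra].
      apply Rmult_le_reg_r with (hnorm (Q v)); auto. nra. }
    apply Rmult_le_reg_l with beta; auto. rewrite <- Rmult_assoc, Rinv_r, Rmult_1_l by lra. auto.
  - intros; apply HQ.
  - intros x Hx. split.
    + rewrite (proj2 (HQ x)). apply (proj_id W pw HWs Hpw); auto.
    + apply Huniq; [apply HQ | auto | rewrite (proj2 (HQ _)); apply (proj_id W pw HWs Hpw); auto].
Qed.

Lemma compressed_compact (V V' : E -> Prop) (K p p' : E -> E) :
  compact_on V K -> subspace V' -> is_orth_proj V p -> is_orth_proj V' p' ->
  compact_on V' (fun x => p' (K (p x))).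
Proof.
  intros Hc HV' Hp Hp' u _ [B HB].
  destruct (Hc (fun n => p (u n))) as [phi [Hphi [l Hl]]];
    [intros; apply (proj_in V p Hp) | exists B; intro n; eapply Rle_trans; [apply (proj_norm V p Hp) | auto]|].
  exists phi. split; auto. exists (p' l). intros e He. destruct (Hl e He) as [N HN]. exists N.
  intros m Hm. specialize (HN m Hm). cbv beta in *.
  rewrite <- (lin_sub p') by apply (proj_linear V' p' HV' Hp').
  eapply Rle_lt_trans; [apply (proj_norm V' p' Hp') | auto].
Qed.

Lemma compressed_symmetric (V : E -> Prop) (K p : E -> E) :
  subspace V -> is_orth_proj V p -> (forall x, V x -> V (K x)) ->
  (forall x y, V x -> V y -> ip (K x) y = ip x (K y)) ->
  forall a b, ip (K (p a)) b = ip a (K (p b)).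
Proof.
  intros HV Hp HKV Hs a b.
  assert (HKa : V (K (p a))) by (apply HKV, (proj_in V p Hp)).
  assert (HKb : V (K (p b))) by (apply HKV, (proj_in V p Hp)).
  transitivity (ip (K (p a)) (p b)).
  - rewrite !(hinner_sym E (K (p a))). symmetry. apply (proj_ip_in V p HV Hp b _ HKa).
  - rewrite Hs by apply (proj_in V p Hp). apply (proj_ip_in V p HV Hp a _ HKb).
Qed.

(** The key estimate for openness: for [(T', V')] near [(T, V)], the form
    [<T' x, x> - <K P_V x, x>] is coercive on [V'], because [P_V x] is close
    to [x] and the form of [T - K = P] is coercive on [V]. *)
Lemma perturbed_coercive (T T' : E -> E) (V V' : E -> Prop) (P K p2 : E -> E) (alpha M eps : R) :
  ess_pos_split T V P K alpha -> is_orth_proj V p2 -> 0 <= M ->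
  (forall z, hnorm (T z) <= M * hnorm z) -> 0 < eps <= 1 / 2 -> (3 * M + 4) * eps <= alpha / 8 ->
  (forall z, hnorm (hsub (T' z) (T z)) <= eps * hnorm z) ->
  (forall x, V' x -> hnorm (hsub (p2 x) x) <= eps * hnorm x) ->
  forall x, V' x -> alpha / 8 * nsq x <= ip (T' x) x - ip (K (p2 x)) x.
Proof.
  intros HS Hp2 HM HMb He He2 Hop Hclose x Hx.
  assert (HV := closed_subspace_subspace V (split_V _ _ _ _ _ HS)).
  set (x0 := p2 x). assert (Hx0 : V x0) by apply (proj_in V p2 Hp2).
  assert (HKx : ip (K x0) x = ip (K x0) x0)
    by (rewrite !(hinner_sym E (K x0)); symmetry; apply (proj_ip_in V p2 HV Hp2);
        apply (split_KV _ _ _ _ _ HS); auto).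
  rewrite HKx.
  destruct (quad_perturb T T' M eps x x0 (proj1 (split_T _ _ _ _ _ HS)) (split_Tsym _ _ _ _ _ HS)
              HM HMb Hop ltac:(lra) (Hclose x Hx)) as [_ Hq].
  assert (Hq' := Rle_abs (- (quad T' x - quad T x0))). rewrite Rabs_Ropp in Hq'.
  assert (Hdec := split_sum _ _ _ _ _ HS x0 x0 Hx0 Hx0).
  assert (Hco := split_coercive _ _ _ _ _ HS x0 Hx0).
  assert (Hn := proj1 (nsq_close x x0 eps ltac:(lra) (Hclose x Hx))).
  assert (Ha := split_alpha _ _ _ _ _ HS). assert (Hnx := nsq_ge0 x).
  assert ((3 * M + 4) * eps * nsq x <= alpha / 8 * nsq x) by (apply Rmult_le_compat_r; lra).
  assert (alpha * (nsq x / 4) <= alpha * nsq x0) by (apply Rmult_le_compat_l; lra).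
  unfold quad in *. lra.
Qed.

(** [A] is open: near [(T, V)] the restriction of [T'] to [V'] splits as
    [P' + K'] with [P' = P_V' (T' - K P_V)] coercive (hence invertible on
    [V'] by Lax-Milgram) and [K' = P_V' K P_V] compact. *)
Theorem A_open (T : E -> E) (V : E -> Prop) :
  in_A T V ->
  exists eps, 0 < eps /\
    forall (T' : E -> E) (V' : E -> Prop), is_Bs T' -> closed_subspace V' ->
      opnorm_lt (fun x => hsub (T' x) (T x)) eps -> gdist_lt V' V eps -> in_A T' V'.
Proof.
  intros HA. destruct (in_A_split T V HA) as [P [K [alpha HS]]].
  assert (HT := split_T _ _ _ _ _ HS). assert (HV := closed_subspace_subspace V (split_V _ _ _ _ _ HS)).
  assert (Ha := split_alpha _ _ _ _ _ HS). assert (HK := split_K _ _ _ _ _ HS).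
  destruct (bounded_op_bound T HT) as [M [HM HMb]].
  destruct (small_radius (alpha / 8) M) as [eps [He0 [He1 He2]]]; [lra | auto|].
  exists eps. split; auto.
  intros T' V' HT' HV'c Hop [p1 [p2 [Hp1 [Hp2 Hpd]]]].
  assert (HV' := closed_subspace_subspace V' HV'c).
  assert (Hp1b := proj_bounded V' p1 HV' Hp1). assert (Hp2b := proj_bounded V p2 HV Hp2).
  set (P' := fun x => p1 (hsub (T' x) (K (p2 x)))).
  set (K' := fun x => p1 (K (p2 x))).
  assert (HP'ip : forall x y, V' y -> ip (P' x) y = ip (T' x) y - ip (K (p2 x)) y)
    by (intros x y Hy; unfold P'; rewrite (proj_ip_in V' p1 HV' Hp1) by auto; apply ip_subl).
  assert (Hcoer : forall x, V' x -> alpha / 8 * nsq x <= quad P' x).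
  { intros x Hx. unfold quad. rewrite HP'ip by auto.
    apply (perturbed_coercive T T' V V' P K p2 alpha M eps); auto; [apply (opnorm_lt_bound _ _ Hop)|].
    intros y Hy. apply (proj_close V' p1 p2 eps y HV' Hp1); auto.
    intro u. rewrite hnorm_sub_sym. apply (opnorm_lt_bound _ _ Hpd). }
  assert (HP'b : bounded_op P')
    by (apply (bounded_comp p1 (fun x => hsub (T' x) (K (p2 x)))); auto;
        apply (bounded_sub T' (fun x => K (p2 x))); [apply HT' | apply bounded_comp; auto]).
  assert (HP'V : forall x, V' x -> V' (P' x)) by (intros; apply (proj_in V' p1 Hp1)).
  destruct (lax_milgram V' p1 P' (alpha / 8) HV'c Hp1 HP'b HP'V ltac:(lra) Hcoer)
    as [Q' [HQ'b [HQ'V HQ']]].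
  split; [exact HT' | split; [exact HV'c|]].
  exists P', K'.
  split; [exact HP'b|]. split; [apply (bounded_comp p1 (fun x => K (p2 x))); auto; apply bounded_comp; auto|].
  split; [intros; apply (proj_in V' p1 Hp1)|]. split; [intros; apply (proj_in V' p1 Hp1)|].
  split.
  { intros x y Hx Hy. rewrite HP'ip, (hinner_sym E x (P' y)), HP'ip by auto.
    rewrite (proj2 HT'), (compressed_symmetric V K p2 HV Hp2 (split_KV _ _ _ _ _ HS)
                            (split_Ksym _ _ _ _ _ HS)).
    rewrite (hinner_sym E (T' y) x), (hinner_sym E (K (p2 y)) x). ring. }
  split; [exists Q'; auto|]. split.
  { intros x Hx Hx0. assert (H := Hcoer x Hx). assert (H1 := nsq_pos x Hx0).
    assert (0 < alpha / 8 * nsq x) by (apply Rmult_lt_0_compat; lra). unfold quad in H. lra. }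
  split; [apply (compressed_compact V V' K p2 p1); auto; apply (split_Kcompact _ _ _ _ _ HS)|].
  intros x y Hx Hy. rewrite ip_addl, HP'ip by auto. unfold K'.
  rewrite (proj_ip_in V' p1 HV' Hp1) by auto. ring.
Qed.

End Hilbert.

Theorem mainTheorem15 (E : RHilbert) :
  (* A is open in B_s(H) x G(H) *)
  (forall (T : E -> E) (V : E -> Prop), in_A T V ->
     exists eps, 0 < eps /\
       forall (T' : E -> E) (V' : E -> Prop), is_Bs T' -> closed_subspace V' ->
         opnorm_lt (fun x => hsub (T' x) (T x)) eps -> gdist_lt V' V eps ->
         in_A T' V')
  /\
  (* on A, n_- and dim Ker are finite, so both maps are N-valued *)
  (forall (T : E -> E) (V : E -> Prop), in_A T V ->
     (exists n, n_minus_eq T V n) /\ (exists d, ker_dim_eq T V d))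
  /\
  (* n_- + dim Ker is upper semicontinuous on A *)
  (forall (T : E -> E) (V : E -> Prop) (n d : nat), in_A T V ->
     n_minus_eq T V n -> ker_dim_eq T V d ->
     exists eps, 0 < eps /\
       forall (T' : E -> E) (V' : E -> Prop) (n' d' : nat), in_A T' V' ->
         opnorm_lt (fun x => hsub (T' x) (T x)) eps -> gdist_lt V' V eps ->
         n_minus_eq T' V' n' -> ker_dim_eq T' V' d' -> (n' + d' <= n + d)%nat)
  /\
  (* n_- is lower semicontinuous on A *)
  (forall (T : E -> E) (V : E -> Prop) (n : nat), in_A T V ->
     n_minus_eq T V n ->
     exists eps, 0 < eps /\
       forall (T' : E -> E) (V' : E -> Prop) (n' : nat), in_A T' V' ->
         opnorm_lt (fun x => hsub (T' x) (T x)) eps -> gdist_lt V' V eps ->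
         n_minus_eq T' V' n' -> (n <= n')%nat).
Proof.
  split; [|split; [|split]].
  - exact A_open.
  - exact index_nullity_finite.
  - exact index_nullity_usc.
  - exact negative_index_lsc.
Qed.
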